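(* Assume C1 and C3. Let $\overline{E_\lambda}=\sup_{(t,\theta)\in[0,T]\times\Theta}\|E_\theta(t)\|_2$. There exist constants $K_1,K_2,L_1>0$, not depending on $\theta,\theta',t$ or $\lambda$, such that for all $\theta,\theta'\in\Theta$ and $t\in[0,T]$, $$\|E_\theta(t)-E_{\theta'}(t)\|_2\le K_1\overline{E_\lambda}\,e^{L_1\overline{E_\lambda}/\lambda}\|\theta-\theta'\|,$$ and $\overline{E_\lambda}\le K_2e^{L_1/\lambda}$.
   Context: Setting: $T>0$, $C\in\mathbb{R}^{d'\times d}$, $\Theta\subset\mathbb{R}^p$, $\lambda>0$; for $\theta\in\Theta$, $A_\theta(t)\in\mathbb{R}^{d\times d}$. $E_\theta$ solves the Riccati equation $\dot E_\theta=C^TC-A_\theta^TE_\theta-E_\theta A_\theta-\frac1\lambda E_\theta^2$ with $E_\theta(0)=Q$ (symmetric, nonnegative). $\|\cdot\|_2$ is the Frobenius norm. C1: $\Theta$ compact. C3: $(t,\theta)\mapsto A_\theta(t)$ continuous on $[0,T]\times\Theta$ (and, as used, $\theta\mapsto A_\theta$ Lipschitz in $L^2$, e.g. under C4: $\partial A_\theta(t)/\partial\theta$ continuous in $(t,\theta)$). *)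

From Stdlib Require Import Reals Lra Lia List.
Open Scope R_scope.

Fixpoint rsum (n : nat) (f : nat -> R) : R :=
  match n with O => 0 | S m => rsum m f + f m end.

(* Vectors of R^p: functions nat -> R, only coordinates < p matter.
   Matrices: functions nat -> nat -> R, only entries within the size matter. *)
Definition vec := nat -> R.
Definition Mat := nat -> nat -> R.

Definition vnorm (p : nat) (x : vec) : R := sqrt (rsum p (fun k => (x k) ^ 2)).
Definition vdist (p : nat) (x y : vec) : R := vnorm p (fun k => x k - y k).

Definition mmul (n : nat) (A B : Mat) : Mat :=
  fun i j => rsum n (fun k => A i k * B k j).
Definition trn (A : Mat) : Mat := fun i j => A j i.
Definition madd (A B : Mat) : Mat := fun i j => A i j + B i j.
Definition msub (A B : Mat) : Mat := fun i j => A i j - B i j.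
Definition mscal (c : R) (A : Mat) : Mat := fun i j => c * A i j.

Definition frob (m n : nat) (A : Mat) : R :=
  sqrt (rsum m (fun i => rsum n (fun j => (A i j) ^ 2))).

(* Right-hand side of the Riccati equation
   C^T C - A^T E - E A - (1/lam) E^2, with C : d' x d, A E : d x d. *)
Definition riccati_rhs (d d' : nat) (lam : R) (C A E : Mat) : Mat :=
  msub (msub (msub (mmul d' (trn C) C) (mmul d (trn A) E)) (mmul d E A))
       (mscal (1 / lam) (mmul d E E)).

Definition open_p (p : nat) (U : vec -> Prop) : Prop :=
  forall x, U x -> exists eps, 0 < eps /\ forall y, vdist p x y < eps -> U y.

Definition compact_p (p : nat) (Th : vec -> Prop) : Prop :=
  forall (I : Type) (U : I -> vec -> Prop),
    (forall i, open_p p (U i)) ->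
    (forall x, Th x -> exists i, U i x) ->
    exists l : list I, forall x, Th x -> exists i, In i l /\ U i x.

Definition A_cont (d p : nat) (T : R) (Th : vec -> Prop) (A : vec -> R -> Mat)
  : Prop :=
  forall i j, (i < d)%nat -> (j < d)%nat ->
  forall t th, 0 <= t <= T -> Th th ->
  forall eps, 0 < eps -> exists delta, 0 < delta /\
    forall s th', 0 <= s <= T -> Th th' -> Rabs (s - t) < delta ->
      vdist p th th' < delta -> Rabs (A th' s i j - A th t i j) < eps.

Definition A_L2_lipschitz (d p : nat) (T : R) (Th : vec -> Prop)
  (A : vec -> R -> Mat) : Prop :=
  exists L, 0 <= L /\
    forall th th', Th th -> Th th' ->
    exists pr : Riemann_integrable
                  (fun t => (frob d d (msub (A th t) (A th' t))) ^ 2) 0 T,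
      sqrt (RiemannInt pr) <= L * vdist p th th'.

Definition sym_psd (d : nat) (Q : Mat) : Prop :=
  (forall i j, (i < d)%nat -> (j < d)%nat -> Q i j = Q j i) /\
  (forall x : vec, 0 <= rsum d (fun i => rsum d (fun j => x i * Q i j * x j))).

Definition riccati_sol (d d' : nat) (T lam : R) (C Q : Mat)
  (Ath : R -> Mat) (Eth : R -> Mat) : Prop :=
  (forall i j, (i < d)%nat -> (j < d)%nat -> Eth 0 i j = Q i j) /\
  (forall i j, (i < d)%nat -> (j < d)%nat ->
     forall t, 0 <= t <= T -> forall eps, 0 < eps -> exists delta, 0 < delta /\
       forall s, 0 <= s <= T -> Rabs (s - t) < delta ->
         Rabs (Eth s i j - Eth t i j) < eps) /\
  (forall i j, (i < d)%nat -> (j < d)%nat ->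
     forall t, 0 < t < T ->
       derivable_pt_lim (fun s => Eth s i j) t
         (riccati_rhs d d' lam C (Ath t) (Eth t) i j)).

(* Let [a] bound [|A_th(t)|] uniformly (continuity on the compact set [0,T] x Theta) and let
   [B] be the a priori bound [Ebar] on the solutions.  Subtracting the equations for [E_th]
   and [E_th'] gives
     d/dt |E_th - E_th'|^2 <= (4a + 1 + 4B/lam) |E_th - E_th'|^2 + 4 B^2 |A_th - A_th'|^2,
   so Gronwall and the L^2-Lipschitz bound on [th |-> A_th] give the first estimate with
   [L1 = 2T].  Applied to [E] and [E^T] (same [A]) the same inequality shows that [E] is
   symmetric.  [E] is also positive semidefinite: [E + eps e^((a^2+2)t) I] cannot stop being
   positive definite, because near its kernel the Riccati right-hand side pushes it back up.
   Hence [<E, E^2> >= 0], the term [-E^2/lam] only decreases [|E|^2], and Gronwall bounds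
   [|E|] independently of [lam]. *)

From Stdlib Require Import Reals Lra Lia List Classical ClassicalEpsilon.
From Coquelicot Require Import Coquelicot.
Open Scope R_scope.

(** * Finite sums and Cauchy-Schwarz *)

Lemma rsum_ext n f g : (forall k, (k < n)%nat -> f k = g k) -> rsum n f = rsum n g.
Proof.
  induction n as [|n IH]; simpl; intros H; auto.
  rewrite IH by (intros; apply H; lia). rewrite (H n) by lia; auto.
Qed.

Lemma rsum_add n f g : rsum n (fun k => f k + g k) = rsum n f + rsum n g.
Proof. induction n; simpl; [lra | rewrite IHn; lra]. Qed.

Lemma rsum_sub n f g : rsum n (fun k => f k - g k) = rsum n f - rsum n g.
Proof. induction n; simpl; [lra | rewrite IHn; lra]. Qed.

Lemma rsum_scal_l n c f : rsum n (fun k => c * f k) = c * rsum n f.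
Proof. induction n; simpl; [lra | rewrite IHn; lra]. Qed.

Lemma rsum_scal_r n c f : rsum n (fun k => f k * c) = rsum n f * c.
Proof. induction n; simpl; [lra | rewrite IHn; lra]. Qed.

Lemma rsum_eq0 n f : (forall k, (k < n)%nat -> f k = 0) -> rsum n f = 0.
Proof.
  induction n; simpl; intros H; [lra|].
  rewrite IHn by (intros; apply H; lia). rewrite H by lia; lra.
Qed.

Lemma rsum_le n f g : (forall k, (k < n)%nat -> f k <= g k) -> rsum n f <= rsum n g.
Proof.
  induction n; simpl; intros H; [lra|].
  pose proof (H n ltac:(lia)); pose proof (IHn ltac:(intros; apply H; lia)); lra.
Qed.

Lemma rsum_nonneg n f : (forall k, (k < n)%nat -> 0 <= f k) -> 0 <= rsum n f.
Proof. intros H. rewrite <- (rsum_eq0 n (fun _ => 0)) by auto. apply rsum_le; auto. Qed.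

Lemma rsum_term_le n f k : (forall k, (k < n)%nat -> 0 <= f k) -> (k < n)%nat -> f k <= rsum n f.
Proof.
  induction n; intros H Hk; [lia|]. simpl. destruct (Nat.eq_dec k n) as [->|].
  - assert (0 <= rsum n f) by (apply rsum_nonneg; intros; apply H; lia); lra.
  - pose proof (IHn ltac:(intros; apply H; lia) ltac:(lia)); pose proof (H n ltac:(lia)); lra.
Qed.

Lemma rsum_swap n m (f : nat -> nat -> R) :
  rsum n (fun i => rsum m (fun j => f i j)) = rsum m (fun j => rsum n (fun i => f i j)).
Proof. induction n; simpl; [symmetry; apply rsum_eq0; auto | rewrite IHn, <- rsum_add; auto]. Qed.

Lemma rsum_mul n m f g : rsum n (fun i => rsum m (fun j => f i * g j)) = rsum n f * rsum m g.
Proof. rewrite <- rsum_scal_r. apply rsum_ext; intros. apply rsum_scal_l. Qed.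

Lemma discriminant_nonpos al be ga : 0 <= ga ->
  (forall s, 0 <= al + 2 * be * s + ga * s * s) -> be * be <= al * ga.
Proof.
  intros Hga H. destruct Hga as [Hga | <-].
  - specialize (H (- be / ga)).
    replace (al + 2 * be * (- be / ga) + ga * (- be / ga) * (- be / ga))
      with ((al * ga - be * be) / ga) in H by (field; lra).
    apply Rmult_le_compat_r with (r := ga) in H; [|lra].
    unfold Rdiv in H. rewrite Rmult_0_l, Rmult_assoc, Rinv_l in H; lra.
  - destruct (Req_dec be 0) as [-> | Hbe]; [lra|].
    specialize (H (- (al + 1) / (2 * be))).
    replace (al + 2 * be * (- (al + 1) / (2 * be)) + 0 * (- (al + 1) / (2 * be)) * (- (al + 1) / (2 * be)))
      with (-1) in H by (field; auto). lra.
Qed.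

Definition dot n (u v : vec) : R := rsum n (fun k => u k * v k).
Definition n2 n (u : vec) : R := dot n u u.

Lemma n2_nonneg n u : 0 <= n2 n u.
Proof. apply rsum_nonneg; intros; nra. Qed.

Lemma dot_sym n u v : dot n u v = dot n v u.
Proof. apply rsum_ext; intros; ring. Qed.

Lemma n2_lin n al be u v :
  n2 n (fun k => al * u k + be * v k) = al * al * n2 n u + 2 * al * be * dot n u v + be * be * n2 n v.
Proof.
  unfold n2, dot. rewrite <- 3!rsum_scal_l, <- 2!rsum_add. apply rsum_ext; intros; ring.
Qed.

Lemma dot_Cauchy_Schwarz n u v : dot n u v * dot n u v <= n2 n u * n2 n v.
Proof.
  apply discriminant_nonpos; [apply n2_nonneg|]. intros s.
  pose proof (n2_nonneg n (fun k => 1 * u k + s * v k)) as H. rewrite n2_lin in H. lra.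
Qed.

Lemma sqr_le_abs_le a b : a * a <= b * b -> 0 <= b -> Rabs a <= b.
Proof. intros. destruct (Rcase_abs a); [rewrite Rabs_left | rewrite Rabs_right]; nra. Qed.

Lemma Rabs_le_between x y : Rabs x <= y -> - y <= x <= y.
Proof. unfold Rabs; destruct Rcase_abs; lra. Qed.

Lemma young_dot n u v eta : 0 < eta -> 2 * dot n u v <= eta * n2 n u + n2 n v / eta.
Proof.
  intros He. pose proof (n2_nonneg n (fun k => eta * u k + (-1) * v k)) as H. rewrite n2_lin in H.
  apply Rmult_le_reg_r with eta; auto.
  replace ((eta * n2 n u + n2 n v / eta) * eta) with (eta * eta * n2 n u + n2 n v) by (field; lra).
  lra.
Qed.

(** * Frobenius norm and quadratic forms *)

Definition fsq n (M : Mat) : R := rsum n (fun i => rsum n (fun j => (M i j) ^ 2)).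
Definition fip n (M N : Mat) : R := rsum n (fun i => rsum n (fun j => M i j * N i j)).

Lemma fsq_nonneg n M : 0 <= fsq n M.
Proof. apply rsum_nonneg; intros; apply rsum_nonneg; intros; apply pow2_ge_0. Qed.

Lemma frob_nonneg n M : 0 <= frob n n M.
Proof. apply sqrt_pos. Qed.

Lemma frob_sqr n M : frob n n M * frob n n M = fsq n M.
Proof. apply sqrt_sqrt, fsq_nonneg. Qed.

Lemma frob_le_of_fsq n M y : fsq n M <= y * y -> 0 <= y -> frob n n M <= y.
Proof. intros H Hy. rewrite <- (sqrt_square y) by lra. apply sqrt_le_1_alt, H. Qed.

Lemma frob_lt_of_fsq n M y : fsq n M < y * y -> 0 < y -> frob n n M < y.
Proof.
  intros H Hy. rewrite <- (sqrt_square y) by lra. apply sqrt_lt_1_alt. split; [apply fsq_nonneg | auto].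
Qed.

Lemma fsq_entry_le n M i j : (i < n)%nat -> (j < n)%nat -> (M i j) ^ 2 <= fsq n M.
Proof.
  intros Hi Hj. eapply Rle_trans; [| apply (rsum_term_le n (fun i => rsum n (fun j => M i j ^ 2)) i)]; auto.
  - apply (rsum_term_le n (fun j => M i j ^ 2) j); auto. intros; apply pow2_ge_0.
  - intros; apply rsum_nonneg; intros; apply pow2_ge_0.
Qed.

Lemma fsq_msub_diag n X : fsq n (msub X X) = 0.
Proof. apply rsum_eq0; intros; apply rsum_eq0; intros. unfold msub; ring. Qed.

Lemma fsq_trn n M : fsq n (trn M) = fsq n M.
Proof. apply rsum_swap. Qed.

Lemma frob_trn n M : frob n n (trn M) = frob n n M.
Proof. unfold frob. fold (fsq n (trn M)) (fsq n M). rewrite fsq_trn; auto. Qed.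

Lemma fip_ext n M N N' :
  (forall i j, (i < n)%nat -> (j < n)%nat -> N i j = N' i j) -> fip n M N = fip n M N'.
Proof. intros H; apply rsum_ext; intros; apply rsum_ext; intros; rewrite H; auto. Qed.

Lemma fip_add n M N1 N2 : fip n M (madd N1 N2) = fip n M N1 + fip n M N2.
Proof.
  unfold fip. rewrite <- rsum_add. apply rsum_ext; intros.
  rewrite <- rsum_add. apply rsum_ext; intros; unfold madd; ring.
Qed.

Lemma fip_sub n M N1 N2 : fip n M (msub N1 N2) = fip n M N1 - fip n M N2.
Proof.
  unfold fip. rewrite <- rsum_sub. apply rsum_ext; intros.
  rewrite <- rsum_sub. apply rsum_ext; intros; unfold msub; ring.
Qed.

Lemma fip_scal n M c N : fip n M (mscal c N) = c * fip n M N.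
Proof.
  unfold fip. rewrite <- rsum_scal_l. apply rsum_ext; intros.
  rewrite <- rsum_scal_l. apply rsum_ext; intros; unfold mscal; ring.
Qed.

Lemma rsum_lin3 n a b c c1 c2 :
  rsum n (fun k => a k + c1 * b k + c2 * c k) = rsum n a + c1 * rsum n b + c2 * rsum n c.
Proof. rewrite !rsum_add, !rsum_scal_l; auto. Qed.

Lemma fsq_lin n M N s :
  fsq n (madd M (mscal s N)) = fsq n M + 2 * fip n M N * s + fsq n N * s * s.
Proof.
  unfold fsq, fip.
  rewrite (rsum_ext n _ (fun i => rsum n (fun j => M i j ^ 2) + (2 * s) * rsum n (fun j => M i j * N i j)
                                   + (s * s) * rsum n (fun j => N i j ^ 2))).
  - rewrite rsum_lin3; ring.
  - intros. rewrite <- rsum_lin3. apply rsum_ext; intros; unfold madd, mscal; ring.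
Qed.

Lemma fip_Cauchy_Schwarz n M N : fip n M N * fip n M N <= fsq n M * fsq n N.
Proof.
  apply discriminant_nonpos; [apply fsq_nonneg|].
  intros s. rewrite <- fsq_lin. apply fsq_nonneg.
Qed.

Lemma fip_abs_le n M N : Rabs (fip n M N) <= frob n n M * frob n n N.
Proof.
  apply sqr_le_abs_le; [| apply Rmult_le_pos; apply frob_nonneg].
  replace (frob n n M * frob n n N * (frob n n M * frob n n N))
    with (frob n n M * frob n n M * (frob n n N * frob n n N)) by ring.
  rewrite !frob_sqr. apply fip_Cauchy_Schwarz.
Qed.

Lemma fsq_mmul_le n P Q : fsq n (mmul n P Q) <= fsq n P * fsq n Q.
Proof.
  unfold fsq, mmul.
  apply Rle_trans with
    (rsum n (fun i => rsum n (fun j => n2 n (fun k => P i k) * n2 n (fun k => Q k j)))).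
  - apply rsum_le; intros i _; apply rsum_le; intros j _.
    pose proof (dot_Cauchy_Schwarz n (fun k => P i k) (fun k => Q k j)). unfold dot in *; simpl; nra.
  - rewrite rsum_mul, (rsum_swap n n (fun k j => Q k j ^ 2)).
    right; f_equal; apply rsum_ext; intros; apply rsum_ext; intros; simpl; ring.
Qed.

Lemma frob_mmul_le n P Q : frob n n (mmul n P Q) <= frob n n P * frob n n Q.
Proof.
  unfold frob. rewrite <- sqrt_mult by apply fsq_nonneg. apply sqrt_le_1_alt, fsq_mmul_le.
Qed.

Lemma fip_mmul_abs_le n M P Q :
  Rabs (fip n M (mmul n P Q)) <= frob n n M * (frob n n P * frob n n Q).
Proof.
  eapply Rle_trans; [apply fip_abs_le|].
  apply Rmult_le_compat_l; [apply frob_nonneg | apply frob_mmul_le].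
Qed.

Definition mv n (M : Mat) (x : vec) : vec := fun k => rsum n (fun j => M k j * x j).
Definition quad n (x : vec) (M : Mat) : R := rsum n (fun i => rsum n (fun j => x i * M i j * x j)).

Definition symmetric n (M : Mat) : Prop := forall i j, (i < n)%nat -> (j < n)%nat -> M i j = M j i.

Lemma n2_mv_le n M x : n2 n (mv n M x) <= fsq n M * n2 n x.
Proof.
  unfold n2 at 1, dot, fsq. rewrite <- rsum_scal_r. apply rsum_le; intros k _.
  pose proof (dot_Cauchy_Schwarz n (fun j => M k j) x) as H. unfold n2, dot in H |- *.
  unfold mv. eapply Rle_trans; [apply H|]. right; f_equal; apply rsum_ext; intros; ring.
Qed.

Lemma quad_eq_dot n x M : quad n x M = dot n x (mv n M x).
Proof.
  unfold quad, dot, mv. apply rsum_ext; intros.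
  rewrite <- rsum_scal_l. apply rsum_ext; intros; ring.
Qed.

Lemma quad_abs_le n x M : Rabs (quad n x M) <= frob n n M * n2 n x.
Proof.
  rewrite quad_eq_dot. apply sqr_le_abs_le.
  - eapply Rle_trans; [apply dot_Cauchy_Schwarz|].
    pose proof (n2_mv_le n M x). pose proof (n2_nonneg n x). rewrite <- (frob_sqr n M) in *. nra.
  - apply Rmult_le_pos; [apply frob_nonneg | apply n2_nonneg].
Qed.

Lemma quad_sub n x P R : quad n x (msub P R) = quad n x P - quad n x R.
Proof.
  unfold quad. rewrite <- rsum_sub. apply rsum_ext; intros.
  rewrite <- rsum_sub. apply rsum_ext; intros; unfold msub; ring.
Qed.

Lemma quad_scal n x c P : quad n x (mscal c P) = c * quad n x P.
Proof.
  unfold quad. rewrite <- rsum_scal_l. apply rsum_ext; intros.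
  rewrite <- rsum_scal_l. apply rsum_ext; intros; unfold mscal; ring.
Qed.

Lemma quad_mmul_trn m n x P R : quad n x (mmul m (trn P) R) = dot m (mv n P x) (mv n R x).
Proof.
  unfold quad, mmul, mv, trn, dot.
  transitivity (rsum n (fun i => rsum m (fun k => rsum n (fun j => P k i * x i * (R k j * x j))))).
  { apply rsum_ext; intros i _. rewrite <- rsum_swap. apply rsum_ext; intros j _.
    rewrite <- rsum_scal_l, <- rsum_scal_r. apply rsum_ext; intros; ring. }
  rewrite rsum_swap. apply rsum_ext; intros k _.
  exact (rsum_mul n n (fun i => P k i * x i) (fun j => R k j * x j)).
Qed.

Lemma mv_trn_symmetric n E x k : symmetric n E -> (k < n)%nat -> mv n (trn E) x k = mv n E x k.
Proof. intros H Hk. apply rsum_ext; intros. unfold trn. rewrite H; auto. Qed.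

Lemma bilin_eq_dot_mv n E x y :
  rsum n (fun i => rsum n (fun j => y i * E i j * x j)) = dot n (mv n E x) y.
Proof. unfold dot, mv. apply rsum_ext; intros. rewrite <- rsum_scal_r. apply rsum_ext; intros; ring. Qed.

Lemma bilin_symmetric n E x y : symmetric n E ->
  rsum n (fun i => rsum n (fun j => x i * E i j * y j)) =
  rsum n (fun i => rsum n (fun j => y i * E i j * x j)).
Proof.
  intros HE. rewrite rsum_swap. apply rsum_ext; intros; apply rsum_ext; intros. rewrite HE by auto; ring.
Qed.

Lemma quad_lin_symmetric n E x y s : symmetric n E ->
  quad n (fun k => x k + s * y k) E = quad n x E + 2 * s * dot n (mv n E x) y + s * s * quad n y E.
Proof.
  intros HE. unfold quad.
  rewrite (rsum_ext n _ (fun i => rsum n (fun j => x i * E i j * x j)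
      + s * rsum n (fun j => x i * E i j * y j + y i * E i j * x j)
      + (s * s) * rsum n (fun j => y i * E i j * y j))).
  - rewrite rsum_lin3.
    rewrite (rsum_ext n (fun i => rsum n (fun j => x i * E i j * y j + y i * E i j * x j))
               (fun i => rsum n (fun j => x i * E i j * y j) + rsum n (fun j => y i * E i j * x j)))
      by (intros; apply rsum_add).
    rewrite rsum_add, (bilin_symmetric n E x y HE), (bilin_eq_dot_mv n E x y). ring.
  - intros. rewrite <- rsum_lin3. apply rsum_ext; intros; ring.
Qed.

(* Cauchy-Schwarz for the semi-inner product [(u, v) |-> u^T (E + c I) v]. *)
Lemma n2_shift_le_quad n E c M x : 0 <= M -> symmetric n E ->
  (forall v, 0 <= quad n v E + c * n2 n v) ->
  (forall v, quad n v E + c * n2 n v <= M * n2 n v) ->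
  n2 n (fun k => mv n E x k + c * x k) <= M * (quad n x E + c * n2 n x).
Proof.
  intros HM HE Hpos Hup.
  set (y := fun k => mv n E x k + c * x k).
  set (q := fun v => quad n v E + c * n2 n v).
  assert (Hy : dot n (mv n E x) y + c * dot n x y = n2 n y).
  { unfold n2, dot. rewrite <- rsum_scal_l, <- rsum_add. apply rsum_ext; intros; unfold y; ring. }
  assert (Hdisc : n2 n y * n2 n y <= q x * q y).
  { apply discriminant_nonpos; [apply Hpos|]. intros s.
    pose proof (Hpos (fun k => x k + s * y k)) as H.
    rewrite quad_lin_symmetric in H by auto.
    replace (n2 n (fun k => x k + s * y k)) with (n2 n (fun k => 1 * x k + s * y k)) in H
      by (apply rsum_ext; intros; ring).
    rewrite n2_lin in H. unfold q. rewrite <- Hy at 1. eapply Rle_trans; [exact H | right; ring]. }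
  pose proof (n2_nonneg n y). pose proof (Hup y). pose proof (Hpos x). fold (q y) (q x) in *.
  destruct (Req_dec (n2 n y) 0) as [Hz | Hz]; [rewrite Hz; nra|].
  apply Rmult_le_reg_r with (n2 n y); nra.
Qed.

Lemma quad_riccati_rhs d d' lam C A E x : symmetric d E ->
  quad d x (riccati_rhs d d' lam C A E) =
  n2 d' (mv d C x) - 2 * dot d (mv d A x) (mv d E x) - (1 / lam) * n2 d (mv d E x).
Proof.
  intros HE. unfold riccati_rhs. rewrite !quad_sub, quad_scal.
  change (mmul d E A) with (mmul d (trn (trn E)) A).
  change (mmul d E E) with (mmul d (trn (trn E)) E).
  rewrite !quad_mmul_trn.
  assert (Ht : forall z, dot d (mv d (trn E) x) z = dot d (mv d E x) z).
  { intros z. apply rsum_ext; intros. rewrite mv_trn_symmetric; auto. }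
  rewrite !Ht, (dot_sym d (mv d E x) (mv d A x)). unfold n2. ring.
Qed.

(* Up to multiples of [|x|^2], [x^T R x] is controlled by [|E x + c x|^2], which is small
   near the kernel of [E + c I]. *)
Lemma quad_riccati_rhs_lower d d' lam C A E x a c eta :
  0 < lam -> 0 < eta -> 0 <= c -> symmetric d E -> frob d d A <= a ->
  - (eta * (a * a) + c * (a * a + 1) + 2 * c * c / lam) * n2 d x
  - (1 / eta + 2 / lam) * n2 d (fun k => mv d E x k + c * x k)
  <= quad d x (riccati_rhs d d' lam C A E).
Proof.
  intros Hl He Hc HE HA. rewrite quad_riccati_rhs by auto.
  set (u := mv d A x). set (w := mv d E x). set (y := fun k => w k + c * x k).
  pose proof (n2_nonneg d x) as Hx.
  assert (HC : 0 <= n2 d' (mv d C x)) by apply n2_nonneg.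
  assert (Hu : n2 d u <= a * a * n2 d x).
  { pose proof (n2_mv_le d A x). pose proof (frob_nonneg d A). rewrite <- frob_sqr in *.
    fold u in H. assert (frob d d A * frob d d A <= a * a) by nra. nra. }
  assert (Huw : dot d u w = dot d u y - c * dot d u x).
  { unfold dot, y. rewrite <- rsum_scal_l, <- rsum_sub. apply rsum_ext; intros; ring. }
  assert (Y1 : 2 * dot d u y <= eta * n2 d u + n2 d y / eta) by (apply young_dot; auto).
  assert (Y2 : - (n2 d u + n2 d x) <= 2 * dot d u x).
  { pose proof (n2_nonneg d (fun k => 1 * u k + 1 * x k)) as H. rewrite n2_lin in H. lra. }
  assert (Y3 : n2 d w <= 2 * n2 d y + 2 * c * c * n2 d x).
  { replace (n2 d w) with (n2 d (fun k => 1 * y k + (- c) * x k))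
      by (apply rsum_ext; intros; unfold y; ring).
    pose proof (n2_nonneg d (fun k => 1 * y k + c * x k)) as H. rewrite n2_lin in *. lra. }
  assert (Hl' : 0 < 1 / lam) by (apply Rdiv_lt_0_compat; lra).
  assert (Z1 : (1 / lam) * n2 d w <= (2 / lam) * n2 d y + 2 * c * c / lam * n2 d x).
  { apply Rmult_le_compat_l with (r := 1 / lam) in Y3; [|lra].
    replace (2 / lam * n2 d y + 2 * c * c / lam * n2 d x)
      with (1 / lam * (2 * n2 d y + 2 * c * c * n2 d x)) by (field; lra). lra. }
  assert (Z2 : n2 d y / eta = 1 / eta * n2 d y) by (field; lra).
  nra.
Qed.

(* The threshold below which [quad_riccati_rhs_lower] yields a derivative of at least
   [eps |x|^2 / 4]; it comes from Young's inequality with weight [eta = eps / (8 (a^2 + 1))]. *)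
Definition psd_margin (a lam eps M : R) : R := eps / (8 * (8 * (a * a + 1) / eps + 2 / lam) * M).

Lemma psd_margin_pos a lam eps M : 0 < lam -> 0 < eps -> 0 < M -> 0 < psd_margin a lam eps M.
Proof.
  intros. unfold psd_margin. apply Rdiv_lt_0_compat; auto.
  assert (0 < 8 * (a * a + 1) / eps) by (apply Rdiv_lt_0_compat; nra).
  assert (0 < 2 / lam) by (apply Rdiv_lt_0_compat; lra).
  apply Rmult_lt_0_compat; lra.
Qed.

Lemma quad_riccati_rhs_margin d d' lam C A E x a M eps c :
  0 < lam -> 0 < eps -> eps <= c <= lam / 4 -> 0 < M ->
  symmetric d E -> frob d d A <= a ->
  (forall v, 0 <= quad d v E + c * n2 d v) ->
  (forall v, quad d v E + c * n2 d v <= M * n2 d v) ->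
  quad d x E + c * n2 d x <= psd_margin a lam eps M * n2 d x ->
  eps * n2 d x / 4 <= quad d x (riccati_rhs d d' lam C A E) + c * (a * a + 2) * n2 d x.
Proof.
  intros Hl He [Hc1 Hc2] HM HE HA Hpos Hup Hsmall.
  set (eta := eps / (8 * (a * a + 1))).
  assert (Heta : 0 < eta) by (unfold eta; apply Rdiv_lt_0_compat; nra).
  set (K := 1 / eta + 2 / lam).
  assert (HK : K = 8 * (a * a + 1) / eps + 2 / lam) by (unfold K, eta; field; nra).
  assert (HKpos : 0 < K).
  { unfold K. assert (0 < 1 / eta) by (apply Rdiv_lt_0_compat; lra).
    assert (0 < 2 / lam) by (apply Rdiv_lt_0_compat; lra). lra. }
  pose proof (quad_riccati_rhs_lower d d' lam C A E x a c eta Hl Heta ltac:(lra) HE HA) as Hlow.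
  pose proof (n2_shift_le_quad d E c M x ltac:(lra) HE Hpos Hup) as Hy.
  set (y := fun k => mv d E x k + c * x k) in *. fold K in Hlow.
  pose proof (n2_nonneg d x) as Hx. pose proof (n2_nonneg d y).
  assert (Hsmall' : K * n2 d y <= eps / 8 * n2 d x).
  { assert (K * (M * (psd_margin a lam eps M * n2 d x)) = eps / 8 * n2 d x)
      by (unfold psd_margin; rewrite <- HK; field; lra).
    assert (M * (quad d x E + c * n2 d x) <= M * (psd_margin a lam eps M * n2 d x))
      by (apply Rmult_le_compat_l; lra).
    nra. }
  assert (Heta_a : eta * (a * a) <= eps / 8).
  { unfold eta. apply Rmult_le_reg_r with (8 * (a * a + 1)); [nra|].
    replace (eps / (8 * (a * a + 1)) * (a * a) * (8 * (a * a + 1))) with (eps * (a * a)) by (field; nra).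
    lra. }
  assert (Hcc : 2 * c * c / lam <= c / 2).
  { apply Rmult_le_reg_r with lam; auto.
    replace (2 * c * c / lam * lam) with (2 * c * c) by (field; lra). nra. }
  nra.
Qed.

(** * Calculus on an interval *)

Definition continuous_within (a b : R) (f : R -> R) : Prop :=
  forall t, a <= t <= b -> forall eps, 0 < eps -> exists delta, 0 < delta /\
    forall s, a <= s <= b -> Rabs (s - t) < delta -> Rabs (f s - f t) < eps.

Definition clamp (a b s : R) : R := Rmax a (Rmin b s).

Lemma clamp_in a b s : a <= b -> a <= clamp a b s <= b.
Proof. unfold clamp, Rmax, Rmin; intros; repeat destruct Rle_dec; lra. Qed.

Lemma clamp_id a b s : a <= s <= b -> clamp a b s = s.
Proof. unfold clamp, Rmax, Rmin; intros; repeat destruct Rle_dec; lra. Qed.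

Lemma clamp_lipschitz a b s t : a <= b -> Rabs (clamp a b s - clamp a b t) <= Rabs (s - t).
Proof.
  unfold clamp, Rmax, Rmin; intros; repeat destruct Rle_dec; unfold Rabs; repeat destruct Rcase_abs; lra.
Qed.

Lemma continuity_pt_clamp_comp a b f : a <= b -> continuous_within a b f ->
  forall c, continuity_pt (fun s => f (clamp a b s)) c.
Proof.
  intros Hab H c eps Heps.
  destruct (H (clamp a b c) (clamp_in a b c Hab) eps Heps) as [delta [Hd Hs]].
  exists delta; split; auto. intros x [_ Hx]. simpl in *. unfold Rdist in *.
  apply Hs; [apply clamp_in; auto|]. eapply Rle_lt_trans; [apply clamp_lipschitz|]; auto.
Qed.

Lemma continuity_pt_eps f x : continuity_pt f x -> forall eps, 0 < eps ->
  exists delta, 0 < delta /\ forall y, Rabs (y - x) < delta -> Rabs (f y - f x) < eps.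
Proof.
  intros H eps He. destruct (H eps He) as [delta [Hd Hy]]. exists delta; split; auto.
  intros y Hyx. destruct (Req_dec y x) as [->|]; [rewrite Rminus_diag, Rabs_R0; auto|].
  apply (Hy y). repeat split; auto.
Qed.

Lemma continuous_within_of_clamp a b f :
  (forall c, continuity_pt (fun s => f (clamp a b s)) c) -> continuous_within a b f.
Proof.
  intros H t Ht eps He. destruct (continuity_pt_eps _ _ (H t) eps He) as [delta [Hd Hs]].
  exists delta; split; auto. intros s Hs' Hst. specialize (Hs s Hst). rewrite !clamp_id in Hs; auto.
Qed.

Lemma continuity_pt_rsum n (f : nat -> R -> R) c :
  (forall k, (k < n)%nat -> continuity_pt (f k) c) -> continuity_pt (fun s => rsum n (fun k => f k s)) c.
Proof.
  induction n; simpl; intros H; [apply continuity_pt_const; intros ? ?; auto|].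
  apply (continuity_pt_plus (fun s => rsum n (fun k => f k s)) (f n)); [apply IHn; intros|]; apply H; lia.
Qed.

Lemma derivable_pt_lim_rsum n (f : nat -> R -> R) l c :
  (forall k, (k < n)%nat -> derivable_pt_lim (f k) c (l k)) ->
  derivable_pt_lim (fun s => rsum n (fun k => f k s)) c (rsum n l).
Proof.
  induction n; simpl; intros H; [apply derivable_pt_lim_const|].
  apply (derivable_pt_lim_plus (fun s => rsum n (fun k => f k s)) (f n)); [apply IHn; intros|]; apply H; lia.
Qed.

Lemma continuity_pt_fsq d (M : R -> Mat) c :
  (forall i j, (i < d)%nat -> (j < d)%nat -> continuity_pt (fun r => M r i j) c) ->
  continuity_pt (fun r => fsq d (M r)) c.
Proof.
  intros H. apply (continuity_pt_rsum d (fun i r => rsum d (fun j => M r i j ^ 2))); intros i Hi.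
  apply (continuity_pt_rsum d (fun j r => M r i j ^ 2)); intros j Hj.
  apply (continuity_pt_ext (fun r => M r i j * M r i j)); [intros; ring|].
  apply continuity_pt_mult; auto.
Qed.

Lemma derivable_pt_lim_fsq d (M : R -> Mat) L c :
  (forall i j, (i < d)%nat -> (j < d)%nat -> derivable_pt_lim (fun r => M r i j) c (L i j)) ->
  derivable_pt_lim (fun r => fsq d (M r)) c (2 * fip d (M c) L).
Proof.
  intros H. unfold fip. rewrite <- rsum_scal_l.
  rewrite (rsum_ext d _ (fun i => rsum d (fun j => 2 * M c i j * L i j)))
    by (intros; rewrite <- rsum_scal_l; apply rsum_ext; intros; ring).
  apply (derivable_pt_lim_rsum d (fun i r => rsum d (fun j => M r i j ^ 2))); intros i Hi.
  apply (derivable_pt_lim_rsum d (fun j r => M r i j ^ 2)); intros j Hj.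
  apply (derivable_pt_lim_ext (fun r => M r i j * M r i j)); [intros; ring|].
  replace (2 * M c i j * L i j) with (L i j * M c i j + M c i j * L i j) by ring.
  apply derivable_pt_lim_mult; auto.
Qed.

Lemma continuity_pt_quad d x (M : R -> Mat) c :
  (forall i j, (i < d)%nat -> (j < d)%nat -> continuity_pt (fun r => M r i j) c) ->
  continuity_pt (fun r => quad d x (M r)) c.
Proof.
  intros H. apply (continuity_pt_rsum d (fun i r => rsum d (fun j => x i * M r i j * x j))); intros i Hi.
  apply (continuity_pt_rsum d (fun j r => x i * M r i j * x j)); intros j Hj.
  apply (continuity_pt_ext (fun r => (x i * x j) * M r i j)); [intros; ring|].
  apply continuity_pt_scal; auto.
Qed.

Lemma derivable_pt_lim_quad d x (M : R -> Mat) L c :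
  (forall i j, (i < d)%nat -> (j < d)%nat -> derivable_pt_lim (fun r => M r i j) c (L i j)) ->
  derivable_pt_lim (fun r => quad d x (M r)) c (quad d x L).
Proof.
  intros H. apply (derivable_pt_lim_rsum d (fun i r => rsum d (fun j => x i * M r i j * x j))); intros i Hi.
  apply (derivable_pt_lim_rsum d (fun j r => x i * M r i j * x j)); intros j Hj.
  apply (derivable_pt_lim_ext (fun r => (x i * x j) * M r i j)); [intros; ring|].
  replace (x i * L i j * x j) with ((x i * x j) * L i j) by ring. apply derivable_pt_lim_scal; auto.
Qed.

Lemma derivable_pt_lim_exp_scal k c : derivable_pt_lim (fun s => exp (k * s)) c (k * exp (k * c)).
Proof.
  replace (k * exp (k * c)) with (exp (k * c) * k) by ring.
  apply (derivable_pt_lim_comp (fun s => k * s) exp c k); [| apply derivable_pt_lim_exp].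
  pose proof (derivable_pt_lim_scal id k c 1 (derivable_pt_lim_id c)) as H.
  rewrite Rmult_1_r in H; exact H.
Qed.

Lemma derivable_pt_lim_RInt f : (forall c, continuity_pt f c) ->
  forall x, derivable_pt_lim (fun s => RInt f 0 s) x (f x).
Proof.
  intros H x. apply is_derive_Reals, (is_derive_RInt f (fun s => RInt f 0 s) 0).
  - apply filter_forall; intros. apply (@RInt_correct R_CompleteNormedModule).
    apply (@ex_RInt_continuous R_CompleteNormedModule); intros; apply continuity_pt_filterlim; auto.
  - apply continuity_pt_filterlim; auto.
Qed.

Lemma le_of_deriv_nonpos (G l : R -> R) al be : al <= be ->
  (forall c, al <= c <= be -> continuity_pt G c) ->
  (forall c, al < c < be -> derivable_pt_lim G c (l c)) ->
  (forall c, al < c < be -> l c <= 0) -> G be <= G al.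
Proof.
  intros Hab Hc Hd Hl. destruct (Req_dec al be) as [<-|]; [lra|].
  assert (prG : forall c, al < c < be -> derivable_pt G c) by (intros c Hc'; exists (l c); apply Hd, Hc').
  assert (prid : forall c, al < c < be -> derivable_pt id c) by (intros; apply derivable_pt_id).
  destruct (MVT G id al be prG prid ltac:(lra) Hc) as [c [P Heq]].
  { intros; apply derivable_continuous, derivable_id. }
  rewrite (derive_pt_eq_0 G c (l c) (prG c P) (Hd c P)),
          (derive_pt_eq_0 id c 1 (prid c P) (derivable_pt_lim_id c)) in Heq.
  unfold id in Heq. pose proof (Hl c P). nra.
Qed.

Lemma exp_le_compat x y : x <= y -> exp x <= exp y.
Proof. intros [H | ->]; [left; apply exp_increasing; auto | lra]. Qed.

Lemma continuous_within_fsq a b d (M : R -> Mat) : a <= b ->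
  (forall i j, (i < d)%nat -> (j < d)%nat -> continuous_within a b (fun s => M s i j)) ->
  continuous_within a b (fun s => fsq d (M s)).
Proof.
  intros Hab H. apply continuous_within_of_clamp; intros c.
  apply (continuity_pt_fsq d (fun s => M (clamp a b s))); intros.
  apply (continuity_pt_clamp_comp a b (fun s => M s i j)); auto.
Qed.

Lemma continuous_within_scal a b k f : a <= b -> continuous_within a b f ->
  continuous_within a b (fun s => k * f s).
Proof.
  intros Hab H. apply continuous_within_of_clamp; intros c.
  apply continuity_pt_scal, (continuity_pt_clamp_comp a b f); auto.
Qed.

Lemma gronwall_integral T k (u u' g : R -> R) : 0 <= T -> 0 <= k ->
  continuous_within 0 T u -> continuous_within 0 T g ->
  (forall c, 0 < c < T -> derivable_pt_lim u c (u' c)) ->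
  (forall c, 0 < c < T -> u' c <= k * u c + g c) ->
  (forall c, 0 <= c <= T -> 0 <= g c) ->
  forall t, 0 <= t <= T -> u t * exp (- k * t) <= u 0 + RInt (fun s => g (clamp 0 T s)) 0 t.
Proof.
  intros HT Hk Hu Hg Hd Hineq Hg0 t Ht.
  set (gc := fun s => g (clamp 0 T s)).
  assert (Hgc : forall c, continuity_pt gc c) by (apply continuity_pt_clamp_comp; auto).
  set (W := fun s => u (clamp 0 T s) * exp (- k * s) - RInt gc 0 s).
  assert (HW : W t <= W 0).
  { apply (le_of_deriv_nonpos W (fun c => u' c * exp (- k * c) + u c * (- k * exp (- k * c)) - gc c));
      [lra | | |].
    - intros c _. unfold W. apply continuity_pt_minus; [apply continuity_pt_mult|].
      + apply continuity_pt_clamp_comp; auto.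
      + apply derivable_continuous_pt. eexists. apply derivable_pt_lim_exp_scal.
      + apply derivable_continuous_pt. eexists. apply derivable_pt_lim_RInt; auto.
    - intros c Hc. unfold W. apply derivable_pt_lim_minus; [| apply derivable_pt_lim_RInt; auto].
      replace (u c) with (u (clamp 0 T c)) by (rewrite clamp_id; auto; lra).
      apply (derivable_pt_lim_mult (fun s => u (clamp 0 T s)) (fun s => exp (- k * s)));
        [| apply derivable_pt_lim_exp_scal].
      apply (derivable_pt_lim_locally_ext u _ c 0 T); [lra | | apply Hd; lra].
      intros; rewrite clamp_id; auto; lra.
    - intros c Hc. unfold gc. rewrite clamp_id by lra.
      pose proof (exp_pos (- k * c)).
      assert (exp (- k * c) <= 1) by (rewrite <- exp_0; apply exp_le_compat; nra).
      pose proof (Hineq c ltac:(lra)). pose proof (Hg0 c ltac:(lra)). nra. }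
  unfold W in HW. rewrite RInt_point, !clamp_id in HW by lra.
  rewrite Rmult_0_r, exp_0 in HW. change zero with 0 in HW. lra.
Qed.

Lemma RInt_clamp_le T (g : R -> R) t : 0 <= t <= T -> continuous_within 0 T g ->
  (forall c, 0 <= c <= T -> 0 <= g c) ->
  0 <= RInt (fun s => g (clamp 0 T s)) 0 t <= RInt g 0 T.
Proof.
  intros Ht Hg Hg0. set (gc := fun s => g (clamp 0 T s)).
  assert (Hex : forall x y, ex_RInt gc x y).
  { intros. apply (@ex_RInt_continuous R_CompleteNormedModule); intros.
    apply continuity_pt_filterlim, continuity_pt_clamp_comp; auto; lra. }
  assert (Hpos : forall x y, x <= y -> 0 <= RInt gc x y).
  { intros. apply RInt_ge_0; auto. intros; apply Hg0, clamp_in; lra. }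
  assert (HT : RInt gc 0 T = RInt g 0 T).
  { apply RInt_ext. intros x Hx. unfold gc. rewrite clamp_id; auto.
    rewrite Rmin_left, Rmax_right in Hx; lra. }
  rewrite <- HT, <- (RInt_Chasles gc 0 t T) by auto. change plus with Rplus.
  pose proof (Hpos 0 t ltac:(lra)). pose proof (Hpos t T ltac:(lra)). lra.
Qed.

Lemma ex_RInt_continuous_within T g : 0 <= T -> continuous_within 0 T g -> ex_RInt g 0 T.
Proof.
  intros HT Hg. apply (ex_RInt_ext (fun s => g (clamp 0 T s))).
  - intros x Hx. rewrite Rmin_left, Rmax_right in Hx by lra. rewrite clamp_id; lra.
  - apply (@ex_RInt_continuous R_CompleteNormedModule); intros.
    apply continuity_pt_filterlim, continuity_pt_clamp_comp; auto.
Qed.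

Lemma RInt_scal_within T k g : 0 <= T -> continuous_within 0 T g ->
  RInt (fun s => k * g s) 0 T = k * RInt g 0 T.
Proof. intros HT Hg. exact (RInt_scal g 0 T k (ex_RInt_continuous_within T g HT Hg)). Qed.

Lemma RInt_const_R a b c : RInt (fun _ => c) a b = (b - a) * c.
Proof. rewrite RInt_const; reflexivity. Qed.

Lemma gronwall T k (u u' g : R -> R) : 0 <= T -> 0 <= k ->
  continuous_within 0 T u -> continuous_within 0 T g ->
  (forall c, 0 < c < T -> derivable_pt_lim u c (u' c)) ->
  (forall c, 0 < c < T -> u' c <= k * u c + g c) ->
  (forall c, 0 <= c <= T -> 0 <= g c) -> 0 <= u 0 ->
  forall t, 0 <= t <= T -> u t <= (u 0 + RInt g 0 T) * exp (k * T).
Proof.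
  intros HT Hk Hu Hg Hd Hineq Hg0 Hu0 t Ht.
  pose proof (gronwall_integral T k u u' g HT Hk Hu Hg Hd Hineq Hg0 t Ht) as H.
  pose proof (RInt_clamp_le T g t Ht Hg Hg0) as HI.
  assert (Hexp : exp (- k * t) * exp (k * t) = 1)
    by (rewrite <- exp_plus; replace (- k * t + k * t) with 0 by ring; apply exp_0).
  assert (exp (k * t) <= exp (k * T)) by (apply exp_le_compat; nra).
  pose proof (exp_pos (k * t)).
  replace (u t) with (u t * exp (- k * t) * exp (k * t)) by (rewrite Rmult_assoc, Hexp; ring).
  apply Rle_trans with ((u 0 + RInt g 0 T) * exp (k * t)); [apply Rmult_le_compat_r |
    apply Rmult_le_compat_l]; lra.
Qed.

Lemma real_induction T (P : R -> Prop) : 0 <= T -> P 0 ->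
  (forall s, 0 <= s < T -> P s -> exists delta, 0 < delta /\ forall r, s <= r < s + delta -> r <= T -> P r) ->
  (forall t, 0 < t <= T -> (forall s, 0 <= s < t -> P s) -> P t) ->
  forall t, 0 <= t <= T -> P t.
Proof.
  intros HT H0 Hright Hleft.
  set (S := fun t => 0 <= t <= T /\ forall s, 0 <= s <= t -> P s).
  assert (HS0 : S 0) by (split; [lra | intros s Hs; replace s with 0 by lra; auto]).
  destruct (completeness S) as [t0 [Hub Hlub]]; [exists T; intros y [Hy _]; lra | exists 0; auto |].
  assert (Ht0 : 0 <= t0 <= T) by (split; [apply Hub; auto | apply Hlub; intros y [Hy _]; lra]).
  assert (Hbefore : forall s, 0 <= s < t0 -> P s).
  { intros s Hs. destruct (classic (P s)) as [|Hns]; auto.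
    assert (is_upper_bound S s).
    { intros y [Hy HP]. apply Rnot_lt_le. intros Hlt. apply Hns, HP; lra. }
    specialize (Hlub s H). lra. }
  assert (Hat : P t0) by (destruct (Req_dec t0 0) as [->|]; auto; apply Hleft; auto; lra).
  assert (Hend : t0 = T).
  { destruct (Req_dec t0 T); auto. exfalso.
    destruct (Hright t0 ltac:(lra) Hat) as [delta [Hd Hnext]].
    set (t1 := Rmin (t0 + delta / 2) T).
    assert (t0 < t1 <= t0 + delta / 2 /\ t1 <= T) as [Ht1 Ht1T]
      by (unfold t1; split; [split; [apply Rmin_glb_lt | apply Rmin_l] | apply Rmin_r]; lra).
    assert (S t1).
    { split; [lra|]. intros s Hs. destruct (Rlt_or_le s t0); [apply Hbefore; lra | apply Hnext; lra]. }
    specialize (Hub t1 H1). lra. }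
  intros t Ht. destruct (Rlt_or_le t t0); [apply Hbefore; lra | replace t with t0 by lra; auto].
Qed.

(** * Solutions of the Riccati equation *)

Lemma riccati_sol_entry_continuous d d' T lam C Q A E : riccati_sol d d' T lam C Q A E ->
  forall i j, (i < d)%nat -> (j < d)%nat -> continuous_within 0 T (fun s => E s i j).
Proof. intros [_ [H _]] i j Hi Hj t Ht. apply H; auto. Qed.

Lemma riccati_sol_sub_continuous d d' T lam C Q A1 A2 E1 E2 : 0 <= T ->
  riccati_sol d d' T lam C Q A1 E1 -> riccati_sol d d' T lam C Q A2 E2 ->
  continuous_within 0 T (fun s => fsq d (msub (E1 s) (E2 s))).
Proof.
  intros HT S1 S2. apply (continuous_within_fsq 0 T d (fun s => msub (E1 s) (E2 s))); auto.
  intros i j Hi Hj. unfold msub. apply continuous_within_of_clamp; intros c.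
  apply (continuity_pt_minus (fun s => E1 (clamp 0 T s) i j) (fun s => E2 (clamp 0 T s) i j));
    apply (continuity_pt_clamp_comp 0 T (fun s => _ s i j)); auto;
    eapply riccati_sol_entry_continuous; eauto.
Qed.

Lemma riccati_sol_sub_derivable d d' T lam C Q A1 A2 E1 E2 c :
  riccati_sol d d' T lam C Q A1 E1 -> riccati_sol d d' T lam C Q A2 E2 -> 0 < c < T ->
  derivable_pt_lim (fun s => fsq d (msub (E1 s) (E2 s))) c
    (2 * fip d (msub (E1 c) (E2 c))
           (msub (riccati_rhs d d' lam C (A1 c) (E1 c)) (riccati_rhs d d' lam C (A2 c) (E2 c)))).
Proof.
  intros [_ [_ H1]] [_ [_ H2]] Hc. apply (derivable_pt_lim_fsq d (fun s => msub (E1 s) (E2 s))).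
  intros i j Hi Hj. apply derivable_pt_lim_minus; auto.
Qed.

Lemma mmul_sub_sub n P Q P' Q' i j :
  mmul n P Q i j - mmul n P' Q' i j = mmul n P (msub Q Q') i j + mmul n (msub P P') Q' i j.
Proof. unfold mmul, msub. rewrite <- rsum_sub, <- rsum_add. apply rsum_ext; intros; ring. Qed.

Lemma fip_riccati_rhs_sub d d' lam C A1 E1 A2 E2 :
  let D := msub E1 E2 in let dA := msub A1 A2 in
  fip d D (msub (riccati_rhs d d' lam C A1 E1) (riccati_rhs d d' lam C A2 E2)) =
  - (fip d D (mmul d (trn A1) D) + fip d D (mmul d (trn dA) E2))
  - (fip d D (mmul d E1 dA) + fip d D (mmul d D A2))
  - (1 / lam) * (fip d D (mmul d E1 D) + fip d D (mmul d D E2)).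
Proof.
  intros D dA.
  rewrite (fip_ext d D _ (msub (msub (mscal (-1) (madd (mmul d (trn A1) D) (mmul d (trn dA) E2)))
                                     (madd (mmul d E1 dA) (mmul d D A2)))
                               (mscal (1 / lam) (madd (mmul d E1 D) (mmul d D E2))))).
  - rewrite !fip_sub, !fip_scal, !fip_add. ring.
  - intros i j _ _.
    pose proof (mmul_sub_sub d (trn A1) E1 (trn A2) E2 i j) as H1.
    pose proof (mmul_sub_sub d E1 A1 E2 A2 i j) as H2.
    pose proof (mmul_sub_sub d E1 E1 E2 E2 i j) as H3.
    unfold D, dA. cbv beta delta [riccati_rhs msub madd mscal trn] in *.
    rewrite <- H1, <- H2, <- H3. ring.
Qed.

Lemma fip_riccati_rhs_sub_le d d' lam C A1 E1 A2 E2 a B :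
  0 < lam -> frob d d A1 <= a -> frob d d A2 <= a -> frob d d E1 <= B -> frob d d E2 <= B ->
  2 * fip d (msub E1 E2) (msub (riccati_rhs d d' lam C A1 E1) (riccati_rhs d d' lam C A2 E2))
  <= (4 * a + 1 + 4 * B / lam) * fsq d (msub E1 E2) + 4 * B * B * frob d d (msub A1 A2) ^ 2.
Proof.
  intros Hl Ha1 Ha2 Hb1 Hb2. rewrite fip_riccati_rhs_sub, <- frob_sqr.
  set (D := msub E1 E2). set (dA := msub A1 A2).
  pose proof (fip_mmul_abs_le d D (trn A1) D) as X1.
  pose proof (fip_mmul_abs_le d D (trn dA) E2) as X2.
  pose proof (fip_mmul_abs_le d D E1 dA) as X3.
  pose proof (fip_mmul_abs_le d D D A2) as X4.
  pose proof (fip_mmul_abs_le d D E1 D) as X5.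
  pose proof (fip_mmul_abs_le d D D E2) as X6.
  rewrite !frob_trn in *.
  pose proof (frob_nonneg d D). pose proof (frob_nonneg d dA).
  set (fD := frob d d D) in *. set (fA := frob d d dA) in *.
  pose proof (frob_nonneg d A1). pose proof (frob_nonneg d A2).
  pose proof (frob_nonneg d E1). pose proof (frob_nonneg d E2).
  apply Rabs_le_between in X1, X2, X3, X4, X5, X6.
  assert (0 <= fD * fD) by nra. assert (0 <= fD * fA) by nra.
  assert (fD * (frob d d E1 * fD) <= B * (fD * fD)) by nra.
  assert (fD * (fD * frob d d E2) <= B * (fD * fD)) by nra.
  assert (Hnl : - (1 / lam) * (fip d D (mmul d E1 D) + fip d D (mmul d D E2)) <= 2 * B / lam * (fD * fD)).
  { replace (2 * B / lam * (fD * fD)) with ((1 / lam) * (2 * B * (fD * fD))) by (field; lra).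
    assert (0 < 1 / lam) by (apply Rdiv_lt_0_compat; lra).
    replace (- (1 / lam) * (fip d D (mmul d E1 D) + fip d D (mmul d D E2)))
      with ((1 / lam) * (- (fip d D (mmul d E1 D) + fip d D (mmul d D E2)))) by ring.
    apply Rmult_le_compat_l; lra. }
  assert (fD * (frob d d A1 * fD) <= a * (fD * fD)) by nra.
  assert (fD * (fD * frob d d A2) <= a * (fD * fD)) by nra.
  assert (fD * (fA * frob d d E2) <= B * (fD * fA)) by nra.
  assert (fD * (frob d d E1 * fA) <= B * (fD * fA)) by nra.
  assert (4 * B * fD * fA <= fD * fD + 4 * B * B * fA ^ 2) by (pose proof (pow2_ge_0 (fD - 2 * B * fA)); nra).
  nra.
Qed.

Lemma riccati_sol_sub_le d d' T lam C Q A1 A2 E1 E2 a B :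
  0 < T -> 0 < lam ->
  riccati_sol d d' T lam C Q A1 E1 -> riccati_sol d d' T lam C Q A2 E2 ->
  (forall t, 0 <= t <= T -> frob d d (A1 t) <= a /\ frob d d (A2 t) <= a /\
                            frob d d (E1 t) <= B /\ frob d d (E2 t) <= B) ->
  continuous_within 0 T (fun s => frob d d (msub (A1 s) (A2 s)) ^ 2) ->
  forall t, 0 <= t <= T ->
  fsq d (msub (E1 t) (E2 t)) <=
    4 * B * B * RInt (fun s => frob d d (msub (A1 s) (A2 s)) ^ 2) 0 T * exp ((4 * a + 1 + 4 * B / lam) * T).
Proof.
  intros HT Hl S1 S2 Hbd HdA t Ht.
  destruct (Hbd 0 ltac:(lra)) as [Ha [_ [HB _]]].
  pose proof (frob_nonneg d (A1 0)). pose proof (frob_nonneg d (E1 0)).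
  assert (Hk : 0 <= 4 * a + 1 + 4 * B / lam) by (assert (0 <= B / lam) by (apply Rdiv_le_0_compat; lra); lra).
  assert (Hu0 : fsq d (msub (E1 0) (E2 0)) = 0).
  { destruct S1 as [Q1 _], S2 as [Q2 _].
    apply rsum_eq0; intros; apply rsum_eq0; intros. unfold msub. rewrite Q1, Q2; auto. ring. }
  pose proof (gronwall T (4 * a + 1 + 4 * B / lam) (fun s => fsq d (msub (E1 s) (E2 s)))
                (fun c => 2 * fip d (msub (E1 c) (E2 c)) (msub (riccati_rhs d d' lam C (A1 c) (E1 c))
                                                              (riccati_rhs d d' lam C (A2 c) (E2 c))))
                (fun s => 4 * B * B * frob d d (msub (A1 s) (A2 s)) ^ 2) ltac:(lra) Hk
                (riccati_sol_sub_continuous d d' T lam C Q A1 A2 E1 E2 ltac:(lra) S1 S2)) as G.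
  cbv beta in G. rewrite Hu0, Rplus_0_l, RInt_scal_within in G by (auto; lra).
  apply G; auto; try lra.
  - apply continuous_within_scal; auto; lra.
  - intros c Hc. apply (riccati_sol_sub_derivable d d' T lam C Q); auto.
  - intros c Hc. destruct (Hbd c ltac:(lra)) as [? [? [? ?]]].
    apply fip_riccati_rhs_sub_le; auto.
  - intros c Hc. pose proof (pow2_ge_0 (frob d d (msub (A1 c) (A2 c)))). nra.
Qed.

Lemma riccati_rhs_trn d d' lam C A E i j :
  riccati_rhs d d' lam C A (trn E) i j = riccati_rhs d d' lam C A E j i.
Proof.
  unfold riccati_rhs, msub, mscal, mmul, trn.
  rewrite (rsum_ext d' (fun k => C k i * C k j) (fun k => C k j * C k i)),
          (rsum_ext d (fun k => A k i * E j k) (fun k => E j k * A k i)),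
          (rsum_ext d (fun k => E k i * A k j) (fun k => A k j * E k i)),
          (rsum_ext d (fun k => E k i * E j k) (fun k => E j k * E k i)) by (intros; ring).
  ring.
Qed.

Lemma riccati_sol_trn d d' T lam C Q A E : sym_psd d Q -> riccati_sol d d' T lam C Q A E ->
  riccati_sol d d' T lam C Q A (fun s => trn (E s)).
Proof.
  intros [HQ _] [H0 [H1 H2]]. split; [|split]; intros i j Hi Hj.
  - unfold trn. rewrite H0 by auto. apply HQ; auto.
  - unfold trn. apply H1; auto.
  - intros t Ht. rewrite riccati_rhs_trn. apply H2; auto.
Qed.

Lemma frob_msub_diag n X : frob n n (msub X X) = 0.
Proof. unfold frob. fold (fsq n (msub X X)). rewrite fsq_msub_diag; apply sqrt_0. Qed.

Lemma riccati_sol_symmetric d d' T lam C Q A E a B :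
  0 < T -> 0 < lam -> sym_psd d Q -> riccati_sol d d' T lam C Q A E ->
  (forall t, 0 <= t <= T -> frob d d (A t) <= a /\ frob d d (E t) <= B) ->
  forall t, 0 <= t <= T -> symmetric d (E t).
Proof.
  intros HT Hl HQ S Hbd t Ht i j Hi Hj.
  pose proof (riccati_sol_sub_le d d' T lam C Q A A E (fun s => trn (E s)) a B HT Hl S
                (riccati_sol_trn d d' T lam C Q A E HQ S)) as H.
  rewrite (RInt_ext _ (fun _ => 0)), RInt_const_R in H by (intros; rewrite frob_msub_diag; apply pow_i; lia).
  assert (Hz : fsq d (msub (E t) (trn (E t))) <= 0).
  { eapply Rle_trans; [apply H; auto|].
    - intros s Hs. rewrite frob_trn. destruct (Hbd s Hs); auto.
    - intros s _ eps He. exists 1. split; [lra|]. intros. rewrite !frob_msub_diag.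
      replace (0 ^ 2 - 0 ^ 2) with 0 by ring. rewrite Rabs_R0; auto.
    - right; ring. }
  pose proof (fsq_entry_le d (msub (E t) (trn (E t))) i j Hi Hj) as He.
  cbv beta delta [msub trn] in He, Hz. pose proof (pow2_ge_0 (E t i j - E t j i)).
  apply Rminus_diag_uniq. destruct (Req_dec (E t i j - E t j i) 0) as [|Hne]; auto.
  exfalso. apply (pow_nonzero _ 2 Hne). lra.
Qed.

Section Positivity.

Variables (d d' : nat) (T lam : R) (C Q : Mat) (A E : R -> Mat) (a B eps : R).
Hypotheses (HT : 0 < T) (Hlam : 0 < lam) (HQ : sym_psd d Q) (HE : riccati_sol d d' T lam C Q A E)
  (Hbd : forall t, 0 <= t <= T -> frob d d (A t) <= a /\ frob d d (E t) <= B)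
  (Hsym : forall t, 0 <= t <= T -> symmetric d (E t))
  (Heps : 0 < eps) (Hsmall : eps * exp ((a * a + 2) * T) <= lam / 4).

(* The growth rate [a^2 + 2] of the shift dominates what the Riccati right-hand side can lose
   near the kernel of [E + shift I]. *)
Let shift s := eps * exp ((a * a + 2) * s).
Let h x s := quad d x (E s) + shift s * n2 d x.

Let uniformly_positive s := exists mu, 0 < mu /\ forall x, mu * n2 d x <= h x s.

Let M := B + lam / 4.
Let rho := psd_margin a lam eps M.

Let shift_bounds s : 0 <= s <= T -> eps <= shift s <= lam / 4.
Proof.
  intros Hs. unfold shift. split.
  - assert (1 <= exp ((a * a + 2) * s)) by (rewrite <- exp_0; apply exp_le_compat; nra). nra.
  - eapply Rle_trans; [| exact Hsmall]. apply Rmult_le_compat_l; [lra|]. apply exp_le_compat; nra.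
Qed.

Let M_pos : 0 < M.
Proof. destruct (Hbd 0 ltac:(lra)). pose proof (frob_nonneg d (E 0)). unfold M. lra. Qed.

Let h_le v s : 0 <= s <= T -> h v s <= M * n2 d v.
Proof.
  intros Hs. unfold h, M. destruct (Hbd s Hs) as [_ HEs]. pose proof (shift_bounds s Hs).
  pose proof (quad_abs_le d v (E s)) as Hq. apply Rabs_le_between in Hq. pose proof (n2_nonneg d v).
  assert (frob d d (E s) * n2 d v <= B * n2 d v) by (apply Rmult_le_compat_r; lra).
  assert (shift s * n2 d v <= lam / 4 * n2 d v) by (apply Rmult_le_compat_r; lra). lra.
Qed.

Let h_continuous x c : continuity_pt (fun r => h x (clamp 0 T r)) c.
Proof.
  unfold h. apply continuity_pt_plus.
  - apply (continuity_pt_quad d x (fun r => E (clamp 0 T r))); intros.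
    apply (continuity_pt_clamp_comp 0 T (fun s => E s i j)); [lra|].
    eapply riccati_sol_entry_continuous; eauto.
  - apply continuity_pt_mult; [| apply continuity_pt_const; intros ? ?; auto].
    apply (continuity_pt_comp (clamp 0 T) shift); [| apply derivable_continuous_pt; eexists;
      apply derivable_pt_lim_scal, derivable_pt_lim_exp_scal].
    apply (continuity_pt_clamp_comp 0 T (fun s => s)); [lra|]. intros t _ e He. exists e; auto.
Qed.

Let h_derivable x c : 0 < c < T ->
  derivable_pt_lim (h x) c
    (quad d x (riccati_rhs d d' lam C (A c) (E c)) + shift c * (a * a + 2) * n2 d x).
Proof.
  intros Hc. unfold h. apply derivable_pt_lim_plus.
  - apply (derivable_pt_lim_quad d x E). intros i j Hi Hj. destruct HE as [_ [_ Hder]]. apply Hder; auto.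
  - replace (shift c * (a * a + 2) * n2 d x) with
      (eps * ((a * a + 2) * exp ((a * a + 2) * c)) * n2 d x + shift c * 0) by (unfold shift; ring).
    apply (derivable_pt_lim_mult shift (fun _ => n2 d x));
      [apply derivable_pt_lim_scal, derivable_pt_lim_exp_scal | apply derivable_pt_lim_const].
Qed.

Let h_near s : 0 <= s <= T -> forall eta, 0 < eta -> exists delta, 0 < delta /\
  forall s', 0 <= s' <= T -> Rabs (s' - s) < delta -> forall x, Rabs (h x s' - h x s) <= eta * n2 d x.
Proof.
  intros Hs eta Heta.
  assert (HEc : continuous_within 0 T (fun r => fsq d (msub (E r) (E s)))).
  { apply (continuous_within_fsq 0 T d (fun r => msub (E r) (E s))); [lra|]. intros i j Hi Hj.
    intros t Ht e He. destruct (riccati_sol_entry_continuous d d' T lam C Q A E HE i j Hi Hj t Ht e He)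
      as [delta [Hd Hcl]]. exists delta. split; auto. intros. unfold msub.
    replace (E s0 i j - E s i j - (E t i j - E s i j)) with (E s0 i j - E t i j) by ring. auto. }
  destruct (HEc s Hs ((eta / 2) * (eta / 2)) ltac:(nra)) as [d1 [Hd1 H1]].
  assert (Hsh : continuity_pt shift s)
    by (apply derivable_continuous_pt; eexists; apply derivable_pt_lim_scal, derivable_pt_lim_exp_scal).
  destruct (continuity_pt_eps _ _ Hsh (eta / 2) ltac:(lra)) as [d2 [Hd2 H2]].
  exists (Rmin d1 d2). split; [apply Rmin_pos; auto|].
  intros s' Hs' Hss x.
  specialize (H1 s' Hs' (Rlt_le_trans _ _ _ Hss (Rmin_l _ _))).
  specialize (H2 s' (Rlt_le_trans _ _ _ Hss (Rmin_r _ _))).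
  rewrite fsq_msub_diag, Rminus_0_r in H1. pose proof (Rle_abs (fsq d (msub (E s') (E s)))).
  assert (Hf : frob d d (msub (E s') (E s)) < eta / 2) by (apply frob_lt_of_fsq; lra).
  replace (h x s' - h x s) with (quad d x (msub (E s') (E s)) + (shift s' - shift s) * n2 d x)
    by (unfold h; rewrite quad_sub; ring).
  eapply Rle_trans; [apply Rabs_triang|]. rewrite Rabs_mult.
  pose proof (quad_abs_le d x (msub (E s') (E s))). pose proof (n2_nonneg d x).
  rewrite (Rabs_right (n2 d x)) by lra.
  assert (Rabs (shift s' - shift s) * n2 d x <= eta / 2 * n2 d x) by (apply Rmult_le_compat_r; lra).
  assert (frob d d (msub (E s') (E s)) * n2 d x <= eta / 2 * n2 d x) by (apply Rmult_le_compat_r; lra).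
  lra.
Qed.

Let uniformly_positive_0 : uniformly_positive 0.
Proof.
  exists eps. split; auto. intros x. unfold h.
  replace (quad d x (E 0)) with (quad d x Q).
  2: { apply rsum_ext; intros; apply rsum_ext; intros. destruct HE as [HE0 _]. rewrite HE0; auto. }
  destruct HQ as [_ HQ2]. pose proof (HQ2 x).
  unfold shift. rewrite Rmult_0_r, exp_0, Rmult_1_r. fold (quad d x Q) in H. lra.
Qed.

Let uniformly_positive_right s : 0 <= s <= T -> uniformly_positive s ->
  exists delta, 0 < delta /\ forall r, 0 <= r <= T -> Rabs (r - s) < delta -> uniformly_positive r.
Proof.
  intros Hs [mu [Hmu Hg]]. destruct (h_near s Hs (mu / 2) ltac:(lra)) as [delta [Hd Hn]].
  exists delta; split; auto. intros r Hr Hrs. exists (mu / 2). split; [lra|]. intros x.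
  specialize (Hn r Hr Hrs x). specialize (Hg x). apply Rabs_le_between in Hn. lra.
Qed.

Let h_growth x t0 del : 0 <= t0 - del -> 0 < del -> t0 <= T ->
  (forall s, t0 - del <= s < t0 -> uniformly_positive s) ->
  (forall r, t0 - del <= r <= t0 -> h x r <= rho * n2 d x) ->
  h x (t0 - del) + del * (eps * n2 d x / 4) <= h x t0.
Proof.
  intros Hd0 Hdel Ht0 Hpos Hclose.
  assert (Hmono : eps * n2 d x / 4 * t0 - h x (clamp 0 T t0) <=
                  eps * n2 d x / 4 * (t0 - del) - h x (clamp 0 T (t0 - del))).
  { apply (le_of_deriv_nonpos (fun r => eps * n2 d x / 4 * r - h x (clamp 0 T r))
      (fun c => eps * n2 d x / 4 * 1 -
         (quad d x (riccati_rhs d d' lam C (A c) (E c)) + shift c * (a * a + 2) * n2 d x))); [lra | | |].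
    - intros c _. apply continuity_pt_minus; [| apply h_continuous].
      apply continuity_pt_scal, derivable_continuous_pt, derivable_pt_id.
    - intros c Hc. apply derivable_pt_lim_minus; [apply derivable_pt_lim_scal, derivable_pt_lim_id|].
      apply (derivable_pt_lim_locally_ext (h x) _ c 0 T); [lra | | apply h_derivable; lra].
      intros; rewrite clamp_id; auto; lra.
    - intros c Hc. destruct (Hpos c ltac:(lra)) as [mu [Hmu Hg]].
      destruct (Hbd c ltac:(lra)) as [HAc _].
      assert (eps * n2 d x / 4 <=
              quad d x (riccati_rhs d d' lam C (A c) (E c)) + shift c * (a * a + 2) * n2 d x).
      { apply (quad_riccati_rhs_margin d d' lam C (A c) (E c) x a M eps (shift c)); auto.
        - apply shift_bounds; lra.
        - apply Hsym; lra.
        - intros v. pose proof (Hg v). pose proof (n2_nonneg d v). fold (h v c). nra.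
        - intros v. apply h_le; lra.
        - apply Hclose; lra. }
      lra. }
  rewrite !clamp_id in Hmono by lra. lra.
Qed.

(* If [h x t0] is small then [h x] was small on a left window, where it grew at rate
   [eps |x|^2 / 4] by [h_growth]. *)
Let uniformly_positive_left t0 : 0 < t0 <= T ->
  (forall s, 0 <= s < t0 -> uniformly_positive s) -> uniformly_positive t0.
Proof.
  intros Ht0 Hbefore.
  assert (Hrho : 0 < rho) by (apply psd_margin_pos, M_pos; auto).
  destruct (h_near t0 ltac:(lra) (rho / 2) ltac:(lra)) as [d1 [Hd1 Hn1]].
  set (del := Rmin (d1 / 2) t0).
  assert (Hdel : 0 < del <= d1 / 2 /\ del <= t0)
    by (unfold del; repeat split; [apply Rmin_pos | apply Rmin_l | apply Rmin_r]; lra).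
  exists (Rmin (rho / 2) (del * eps / 8)). split; [apply Rmin_pos; nra|]. intros x.
  pose proof (Rmin_l (rho / 2) (del * eps / 8)). pose proof (Rmin_r (rho / 2) (del * eps / 8)).
  pose proof (n2_nonneg d x).
  destruct (Rle_or_lt (rho / 2 * n2 d x) (h x t0)) as [Hbig | Hsmall'].
  - eapply Rle_trans; [| exact Hbig]. apply Rmult_le_compat_r; lra.
  - assert (Hgrow : h x (t0 - del) + del * (eps * n2 d x / 4) <= h x t0).
    { apply h_growth; try lra.
      - intros s Hs. apply Hbefore; lra.
      - intros r Hr. assert (Habs : Rabs (r - t0) < d1) by (rewrite Rabs_left1; lra).
        specialize (Hn1 r ltac:(lra) Habs x). apply Rabs_le_between in Hn1. lra. }
    destruct (Hbefore (t0 - del) ltac:(lra)) as [mu' [Hmu' Hg']]. specialize (Hg' x).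
    assert (0 <= mu' * n2 d x) by nra.
    assert (Rmin (rho / 2) (del * eps / 8) * n2 d x <= del * eps / 8 * n2 d x)
      by (apply Rmult_le_compat_r; lra).
    assert (0 <= del * eps * n2 d x) by (apply Rmult_le_pos; nra).
    nra.
Qed.

Lemma riccati_sol_quad_shift_nonneg t x : 0 <= t <= T -> 0 <= quad d x (E t) + shift t * n2 d x.
Proof.
  intros Ht.
  assert (Hall : forall t, 0 <= t <= T -> uniformly_positive t).
  { apply real_induction; [lra | exact uniformly_positive_0 | | exact uniformly_positive_left].
    intros s Hs Hps. destruct (uniformly_positive_right s ltac:(lra) Hps) as [delta [Hd Hr]].
    exists delta. split; auto. intros r Hr1 Hr2. apply Hr; [lra|]. rewrite Rabs_right; lra. }
  destruct (Hall t Ht) as [mu [Hmu Hg]].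
  pose proof (Hg x). pose proof (n2_nonneg d x). fold (h x t). nra.
Qed.

End Positivity.

Lemma riccati_sol_psd d d' T lam C Q A E a B :
  0 < T -> 0 < lam -> sym_psd d Q -> riccati_sol d d' T lam C Q A E ->
  (forall t, 0 <= t <= T -> frob d d (A t) <= a /\ frob d d (E t) <= B) ->
  forall t x, 0 <= t <= T -> 0 <= quad d x (E t).
Proof.
  intros HT Hl HQ S Hbd t x Ht.
  pose proof (riccati_sol_symmetric d d' T lam C Q A E a B HT Hl HQ S Hbd) as Hsym.
  apply Rnot_lt_le. intros Hq.
  set (K := exp ((a * a + 2) * T)). set (n := n2 d x). set (q := quad d x (E t)) in *.
  assert (HK : 0 < K) by apply exp_pos. assert (Hn : 0 <= n) by apply n2_nonneg.
  set (eps := Rmin (lam / 4 / K) (- q / (2 * K * (n + 1)))).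
  assert (Heps : 0 < eps) by (apply Rmin_pos; apply Rdiv_lt_0_compat; nra).
  assert (HepsK : eps * K <= lam / 4).
  { pose proof (Rmin_l (lam / 4 / K) (- q / (2 * K * (n + 1)))) as H.
    apply Rmult_le_compat_r with (r := K) in H; [| lra].
    replace (lam / 4 / K * K) with (lam / 4) in H by (field; lra). auto. }
  pose proof (riccati_sol_quad_shift_nonneg d d' T lam C Q A E a B eps HT Hl HQ S Hbd Hsym Heps HepsK
                t x Ht) as H.
  fold q n in H.
  assert (exp ((a * a + 2) * t) <= K) by (apply exp_le_compat; nra).
  assert (eps * K * (n + 1) <= - q / 2).
  { pose proof (Rmin_r (lam / 4 / K) (- q / (2 * K * (n + 1)))) as H'.
    apply Rmult_le_compat_r with (r := K * (n + 1)) in H'; [| nra].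
    replace (- q / (2 * K * (n + 1)) * (K * (n + 1))) with (- q / 2) in H' by (field; nra).
    rewrite Rmult_assoc; exact H'. }
  assert (eps * exp ((a * a + 2) * t) * n <= eps * K * (n + 1)).
  { pose proof (exp_pos ((a * a + 2) * t)). rewrite !Rmult_assoc.
    apply Rmult_le_compat_l; [lra | nra]. }
  lra.
Qed.

Lemma fip_mmul_self d E : fip d E (mmul d E E) = rsum d (fun j => quad d (fun i => E i j) E).
Proof.
  unfold fip, mmul, quad.
  transitivity (rsum d (fun i => rsum d (fun j => rsum d (fun k => E i j * E i k * E k j)))).
  { apply rsum_ext; intros; apply rsum_ext; intros. rewrite <- rsum_scal_l. apply rsum_ext; intros; ring. }
  rewrite rsum_swap. apply rsum_ext; intros. apply rsum_ext; intros. apply rsum_ext; intros. ring.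
Qed.

Lemma fip_riccati_rhs_le d d' lam C A E a :
  0 < lam -> frob d d A <= a -> (forall x, 0 <= quad d x E) ->
  2 * fip d E (riccati_rhs d d' lam C A E)
  <= (4 * a + 1) * fsq d E + frob d d (mmul d' (trn C) C) ^ 2.
Proof.
  intros Hl HA Hpsd. unfold riccati_rhs. rewrite !fip_sub, fip_scal.
  pose proof (fip_abs_le d E (mmul d' (trn C) C)) as X1.
  pose proof (fip_mmul_abs_le d E (trn A) E) as X2.
  pose proof (fip_mmul_abs_le d E E A) as X3.
  assert (X4 : 0 <= 1 / lam * fip d E (mmul d E E)).
  { apply Rmult_le_pos; [apply Rlt_le, Rdiv_lt_0_compat; lra|].
    rewrite fip_mmul_self. apply rsum_nonneg; auto. }
  rewrite frob_trn in X2. rewrite <- frob_sqr.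
  pose proof (frob_nonneg d E). pose proof (frob_nonneg d A).
  set (fE := frob d d E) in *. set (ga := frob d d (mmul d' (trn C) C)) in *.
  apply Rabs_le_between in X1, X2, X3.
  assert (fE * (frob d d A * fE) <= a * (fE * fE)) by nra.
  assert (2 * fE * ga <= fE * fE + ga ^ 2) by (pose proof (pow2_ge_0 (fE - ga)); nra).
  nra.
Qed.

Lemma riccati_sol_fsq_le d d' T lam C Q A E a B :
  0 < T -> 0 < lam -> sym_psd d Q -> riccati_sol d d' T lam C Q A E ->
  (forall t, 0 <= t <= T -> frob d d (A t) <= a /\ frob d d (E t) <= B) ->
  forall t, 0 <= t <= T ->
  fsq d (E t) <= (fsq d Q + T * frob d d (mmul d' (trn C) C) ^ 2) * exp ((4 * a + 1) * T).
Proof.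
  intros HT Hl HQ S Hbd t Ht.
  destruct (Hbd 0 ltac:(lra)) as [Ha _]. pose proof (frob_nonneg d (A 0)).
  assert (HE0 : fsq d (E 0) = fsq d Q).
  { apply rsum_ext; intros; apply rsum_ext; intros. destruct S as [HE0 _]. rewrite HE0; auto. }
  set (ga := frob d d (mmul d' (trn C) C)).
  replace (T * ga ^ 2) with (RInt (fun _ => ga ^ 2) 0 T) by (rewrite RInt_const_R, Rminus_0_r; reflexivity).
  rewrite <- HE0.
  apply (gronwall T (4 * a + 1) (fun s => fsq d (E s))
           (fun c => 2 * fip d (E c) (riccati_rhs d d' lam C (A c) (E c)))); auto; try lra.
  - apply continuous_within_fsq; [lra|]. eapply riccati_sol_entry_continuous; eauto.
  - intros s Hs eps He. exists 1. split; [lra|]. intros. rewrite Rminus_diag, Rabs_R0; auto.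
  - intros c Hc. apply derivable_pt_lim_fsq. intros i j Hi Hj. destruct S as [_ [_ Hder]]. apply Hder; auto.
  - intros c Hc. destruct (Hbd c ltac:(lra)) as [HAc _].
    apply fip_riccati_rhs_le; auto. intros x. apply (riccati_sol_psd d d' T lam C Q A E a B); auto; lra.
  - intros; apply pow2_ge_0.
  - apply fsq_nonneg.
Qed.

(** * Uniform bound on the coefficient *)

Lemma vnorm_n2 p u : vnorm p u = sqrt (n2 p u).
Proof. unfold vnorm, n2, dot. f_equal. apply rsum_ext; intros; ring. Qed.

Lemma vdist_self p x : vdist p x x = 0.
Proof. unfold vdist. rewrite vnorm_n2, <- sqrt_0. f_equal. apply rsum_eq0; intros; ring. Qed.

Lemma vnorm_triang p u v : vnorm p (fun k => u k + v k) <= vnorm p u + vnorm p v.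
Proof.
  rewrite !vnorm_n2. pose proof (sqrt_pos (n2 p u)). pose proof (sqrt_pos (n2 p v)).
  rewrite <- (sqrt_square (sqrt (n2 p u) + sqrt (n2 p v))) by lra. apply sqrt_le_1_alt.
  replace (n2 p (fun k => u k + v k)) with (n2 p (fun k => 1 * u k + 1 * v k))
    by (apply rsum_ext; intros; ring).
  rewrite n2_lin.
  assert (Hcs : dot p u v <= sqrt (n2 p u) * sqrt (n2 p v)).
  { apply Rle_trans with (Rabs (dot p u v)); [apply Rle_abs|]. apply sqr_le_abs_le; [| nra].
    replace (sqrt (n2 p u) * sqrt (n2 p v) * (sqrt (n2 p u) * sqrt (n2 p v)))
      with (sqrt (n2 p u) * sqrt (n2 p u) * (sqrt (n2 p v) * sqrt (n2 p v))) by ring.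
    rewrite !sqrt_sqrt by apply n2_nonneg. apply dot_Cauchy_Schwarz. }
  pose proof (sqrt_sqrt (n2 p u) (n2_nonneg p u)). pose proof (sqrt_sqrt (n2 p v) (n2_nonneg p v)). nra.
Qed.

Lemma vdist_triang p x y z : vdist p x z <= vdist p x y + vdist p y z.
Proof.
  unfold vdist.
  replace (vnorm p (fun k => x k - z k)) with (vnorm p (fun k => (x k - y k) + (y k - z k)))
    by (rewrite !vnorm_n2; f_equal; apply rsum_ext; intros; ring).
  apply vnorm_triang.
Qed.

Lemma finite_upper_bound n (P : nat -> R -> Prop) :
  (forall i, (i < n)%nat -> exists b, P i b) ->
  (forall i b b', P i b -> b <= b' -> P i b') -> exists b, forall i, (i < n)%nat -> P i b.
Proof.
  intros H Hm. induction n as [|n IH]; [exists 0; intros; lia|].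
  destruct IH as [b1 Hb1]; [intros; apply H; lia|].
  destruct (H n ltac:(lia)) as [b2 Hb2]. exists (Rmax b1 b2). intros i Hi.
  destruct (Nat.eq_dec i n) as [->|]; [eapply Hm; eauto; apply Rmax_r|].
  eapply Hm; [apply Hb1; lia | apply Rmax_l].
Qed.

Lemma finite_lower_bound n (P : nat -> R -> Prop) :
  (forall i, (i < n)%nat -> exists b, 0 < b /\ P i b) ->
  (forall i b b', P i b -> 0 < b' <= b -> P i b') -> exists b, 0 < b /\ forall i, (i < n)%nat -> P i b.
Proof.
  intros H Hm. induction n as [|n IH]; [exists 1; split; [lra | intros; lia]|].
  destruct IH as [b1 [Hb1 Hb1']]; [intros; apply H; lia|].
  destruct (H n ltac:(lia)) as [b2 [Hb2 Hb2']]. exists (Rmin b1 b2).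
  assert (0 < Rmin b1 b2) by (apply Rmin_pos; auto). split; auto. intros i Hi.
  destruct (Nat.eq_dec i n) as [->|]; [eapply Hm; eauto; split; [auto | apply Rmin_r]|].
  eapply Hm; [apply Hb1'; lia | split; [auto | apply Rmin_l]].
Qed.

Lemma fold_right_Rmax_ge {X} (b : X -> R) l i :
  In i l -> b i <= fold_right (fun j acc => Rmax (b j) acc) 0 l.
Proof.
  induction l as [|j l IH]; simpl; intros H; [contradiction|].
  destruct H as [->|H]; [apply Rmax_l | eapply Rle_trans; [apply IH, H | apply Rmax_r]].
Qed.

Lemma A_cont_entry_continuous d p T Th A th i j : A_cont d p T Th A -> Th th ->
  (i < d)%nat -> (j < d)%nat -> continuous_within 0 T (fun s => A th s i j).
Proof.
  intros HA Hth Hi Hj t Ht eps He. destruct (HA i j Hi Hj t th Ht Hth eps He) as [delta [Hd Hs]].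
  exists delta; split; auto. intros s Hs1 Hs2. apply Hs; auto. rewrite vdist_self; auto.
Qed.

Lemma A_entries_bounded_at d p T Th A th0 : 0 < T -> A_cont d p T Th A -> Th th0 ->
  exists b, forall i, (i < d)%nat -> forall j, (j < d)%nat -> forall t, 0 <= t <= T ->
    Rabs (A th0 t i j) <= b.
Proof.
  intros HT HA Hth0.
  apply (finite_upper_bound d (fun i b => forall j, (j < d)%nat -> forall t, 0 <= t <= T ->
                                            Rabs (A th0 t i j) <= b));
    [| intros; eapply Rle_trans; eauto]. intros i Hi.
  apply (finite_upper_bound d (fun j b => forall t, 0 <= t <= T -> Rabs (A th0 t i j) <= b));
    [| intros; eapply Rle_trans; eauto]. intros j Hj.
  assert (Hc : forall c, continuity_pt (fun s => Rabs (A th0 (clamp 0 T s) i j)) c).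
  { intros c. apply (continuity_pt_comp (fun s => A th0 (clamp 0 T s) i j) Rabs); [| apply Rcontinuity_abs].
    apply (continuity_pt_clamp_comp 0 T (fun s => A th0 s i j)); [lra|].
    apply (A_cont_entry_continuous d p T Th A); auto. }
  destruct (continuity_ab_maj _ 0 T ltac:(lra) (fun c _ => Hc c)) as [tmax [Hmax _]].
  eexists. intros t Ht. specialize (Hmax t Ht). rewrite clamp_id in Hmax by auto. exact Hmax.
Qed.

Lemma A_cont_local_delta d p T Th A th0 t : A_cont d p T Th A -> Th th0 -> 0 <= t <= T ->
  exists delta, 0 < delta /\ forall th, Th th -> vdist p th0 th < delta ->
    forall s, 0 <= s <= T -> Rabs (s - t) < delta ->
    forall i j, (i < d)%nat -> (j < d)%nat -> Rabs (A th s i j - A th0 t i j) < 1.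
Proof.
  intros HA Hth0 Ht.
  assert (Hex : exists delta, 0 < delta /\ forall i, (i < d)%nat -> forall j, (j < d)%nat ->
      forall th, Th th -> vdist p th0 th < delta ->
      forall s, 0 <= s <= T -> Rabs (s - t) < delta -> Rabs (A th s i j - A th0 t i j) < 1).
  { apply (finite_lower_bound d (fun i delta => forall j, (j < d)%nat -> forall th, Th th ->
      vdist p th0 th < delta -> forall s, 0 <= s <= T -> Rabs (s - t) < delta ->
      Rabs (A th s i j - A th0 t i j) < 1)); [intros i Hi | intros; apply H; auto; lra].
    apply (finite_lower_bound d (fun j delta => forall th, Th th -> vdist p th0 th < delta ->
        forall s, 0 <= s <= T -> Rabs (s - t) < delta -> Rabs (A th s i j - A th0 t i j) < 1));
      [intros j Hj | intros; apply H; auto; lra].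
    destruct (HA i j Hi Hj t th0 Ht Hth0 1 Rlt_0_1) as [delta [Hd Hs]].
    exists delta. split; [auto | intros; apply Hs; auto]. }
  destruct Hex as [delta [Hd Hdelta]].
  exists delta. split; auto.
Qed.

(* The time interval is compact, so the local radii of [A_cont_local_delta] have a positive
   lower bound along it. *)
Lemma A_locally_bounded d p T Th A th0 : 0 < T -> A_cont d p T Th A -> Th th0 ->
  exists r b, 0 < r /\ forall th, Th th -> vdist p th0 th < r -> forall t, 0 <= t <= T ->
    forall i j, (i < d)%nat -> (j < d)%nat -> Rabs (A th t i j) <= b.
Proof.
  intros HT HA Hth0. destruct (A_entries_bounded_at d p T Th A th0 HT HA Hth0) as [b0 Hb0].
  assert (Hdl : forall t, exists delta : posreal, 0 <= t <= T -> forall th, Th th -> vdist p th0 th < delta ->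
      forall s, 0 <= s <= T -> Rabs (s - t) < delta -> forall i j, (i < d)%nat -> (j < d)%nat ->
      Rabs (A th s i j - A th0 t i j) < 1).
  { intros t. destruct (Rle_dec 0 t); [destruct (Rle_dec t T)|].
    2, 3: exists (mkposreal 1 Rlt_0_1); intros; lra.
    destruct (A_cont_local_delta d p T Th A th0 t HA Hth0 ltac:(lra)) as [delta [Hd Hs]].
    exists (mkposreal delta Hd). auto. }
  destruct (compactness_value_1d 0 T (fun t => proj1_sig (constructive_indefinite_description _ (Hdl t))))
    as [r Hr].
  exists r, (b0 + 1). split; [apply cond_pos|].
  intros th Hth Hv s Hs i j Hi Hj. apply NNPP. intros Hn.
  apply (Hr s Hs). intros [t [Ht [Hst Hrt]]]. apply Hn.
  destruct (constructive_indefinite_description _ (Hdl t)) as [delta Hdelta]. simpl in *.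
  pose proof (Hdelta Ht th Hth ltac:(lra) s Hs Hst i j Hi Hj).
  pose proof (Hb0 i Hi j Hj t Ht). pose proof (Rabs_triang_inv (A th s i j) (A th0 t i j)). lra.
Qed.

Lemma A_uniformly_bounded d p T Th A : 0 < T -> compact_p p Th -> A_cont d p T Th A ->
  exists a, forall th, Th th -> forall t, 0 <= t <= T -> frob d d (A th t) <= a.
Proof.
  intros HT HC HA.
  assert (Hrb : forall th0, exists rb : R * R, Th th0 -> 0 < fst rb /\
      forall th, Th th -> vdist p th0 th < fst rb -> forall t, 0 <= t <= T ->
      forall i j, (i < d)%nat -> (j < d)%nat -> Rabs (A th t i j) <= snd rb).
  { intros th0. destruct (classic (Th th0)) as [Hth|Hth]; [|exists (1, 0); intros; contradiction].
    destruct (A_locally_bounded d p T Th A th0 HT HA Hth) as [r [b [Hr Hb]]]. exists (r, b). auto. }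
  set (rb := fun th0 => proj1_sig (constructive_indefinite_description _ (Hrb th0))).
  assert (Hrb' : forall th0, Th th0 -> 0 < fst (rb th0) /\
      forall th, Th th -> vdist p th0 th < fst (rb th0) -> forall t, 0 <= t <= T ->
      forall i j, (i < d)%nat -> (j < d)%nat -> Rabs (A th t i j) <= snd (rb th0)).
  { intros th0. unfold rb. destruct (constructive_indefinite_description _ (Hrb th0)). auto. }
  destruct (HC vec (fun th0 x => Th th0 /\ vdist p th0 x < fst (rb th0))) as [l Hl].
  - intros th0 x [Hth0 Hx]. exists (fst (rb th0) - vdist p th0 x). split; [lra|].
    intros y Hy. split; auto. pose proof (vdist_triang p th0 x y). lra.
  - intros x Hx. exists x. split; auto. rewrite vdist_self. apply Hrb'; auto.
  - set (b := fold_right (fun j acc => Rmax (snd (rb j)) acc) 0 l).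
    exists (sqrt (rsum d (fun _ => rsum d (fun _ => b * b)))).
    intros th Hth t Ht. destruct (Hl th Hth) as [th0 [Hin [Hth0 Hv]]].
    destruct (Hrb' th0 Hth0) as [_ Hbd].
    apply sqrt_le_1_alt. apply rsum_le; intros i Hi. apply rsum_le; intros j Hj.
    pose proof (Hbd th Hth Hv t Ht i j Hi Hj).
    pose proof (fold_right_Rmax_ge (fun j => snd (rb j)) l th0 Hin) as Hmax.
    cbv beta in Hmax. fold b in Hmax.
    pose proof (Rabs_pos (A th t i j)). rewrite <- pow2_abs. simpl. rewrite Rmult_1_r.
    apply Rmult_le_compat; lra.
Qed.

Lemma A_cont_sub_sq_continuous d p T Th A th th' : 0 < T -> A_cont d p T Th A -> Th th -> Th th' ->
  continuous_within 0 T (fun s => frob d d (msub (A th s) (A th' s)) ^ 2).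
Proof.
  intros HT HA Hth Hth'. apply continuous_within_of_clamp; intros c.
  apply (continuity_pt_ext (fun s => fsq d (msub (A th (clamp 0 T s)) (A th' (clamp 0 T s)))));
    [intros; rewrite <- frob_sqr; ring|].
  apply (continuity_pt_fsq d (fun s => msub (A th (clamp 0 T s)) (A th' (clamp 0 T s)))); intros i j Hi Hj.
  apply (continuity_pt_minus (fun s => A th (clamp 0 T s) i j) (fun s => A th' (clamp 0 T s) i j));
    apply (continuity_pt_clamp_comp 0 T (fun s => A _ s i j)); try lra;
    apply (A_cont_entry_continuous d p T Th A); auto.
Qed.

Lemma riccati_sol_sub_frob_le d d' T lam C Q A1 A2 E1 E2 a B L v :
  0 < T -> 0 < lam ->
  riccati_sol d d' T lam C Q A1 E1 -> riccati_sol d d' T lam C Q A2 E2 ->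
  (forall t, 0 <= t <= T -> frob d d (A1 t) <= a /\ frob d d (A2 t) <= a /\
                            frob d d (E1 t) <= B /\ frob d d (E2 t) <= B) ->
  continuous_within 0 T (fun s => frob d d (msub (A1 s) (A2 s)) ^ 2) ->
  0 <= L -> 0 <= v ->
  (exists pr : Riemann_integrable (fun t => frob d d (msub (A1 t) (A2 t)) ^ 2) 0 T,
      sqrt (RiemannInt pr) <= L * v) ->
  forall t, 0 <= t <= T ->
  frob d d (msub (E1 t) (E2 t)) <= 2 * (L + 1) * exp ((4 * a + 1) * T / 2) * B * exp (2 * T * B / lam) * v.
Proof.
  intros HT Hl S1 S2 Hbd HdA HL Hv [pr Hpr] t Ht.
  pose proof (riccati_sol_sub_le d d' T lam C Q A1 A2 E1 E2 a B HT Hl S1 S2 Hbd HdA t Ht) as Hu.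
  rewrite (RInt_Reals _ _ _ pr) in Hu. set (I := RiemannInt pr) in *.
  destruct (Hbd 0 ltac:(lra)) as [_ [_ [HB _]]]. pose proof (frob_nonneg d (E1 0)).
  assert (HI : I <= (L * v) * (L * v)).
  { destruct (Rlt_or_le I 0); [nra|].
    rewrite <- (sqrt_sqrt I) by auto. pose proof (sqrt_pos I). apply Rmult_le_compat; auto. }
  assert (Hk : exp ((4 * a + 1 + 4 * B / lam) * T) =
                (exp ((4 * a + 1) * T / 2) * exp (2 * T * B / lam)) *
                (exp ((4 * a + 1) * T / 2) * exp (2 * T * B / lam)))
    by (rewrite <- !exp_plus; f_equal; field; lra).
  pose proof (exp_pos ((4 * a + 1) * T / 2)). pose proof (exp_pos (2 * T * B / lam)).
  set (e1 := exp ((4 * a + 1) * T / 2)) in *. set (e2 := exp (2 * T * B / lam)) in *.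
  assert (He : 0 <= B * (e1 * e2)) by (apply Rmult_le_pos; [lra | apply Rmult_le_pos; lra]).
  apply Rle_trans with (2 * L * v * (B * (e1 * e2))).
  - apply frob_le_of_fsq; [| apply Rmult_le_pos; [nra | lra]].
    rewrite Hk in Hu. eapply Rle_trans; [exact Hu|].
    replace (2 * L * v * (B * (e1 * e2)) * (2 * L * v * (B * (e1 * e2))))
      with (4 * (B * (e1 * e2)) * (B * (e1 * e2)) * ((L * v) * (L * v))) by ring.
    replace (4 * B * B * I * (e1 * e2 * (e1 * e2))) with (4 * (B * (e1 * e2)) * (B * (e1 * e2)) * I) by ring.
    apply Rmult_le_compat_l; [nra | auto].
  - replace (2 * (L + 1) * e1 * B * e2 * v) with (2 * (L + 1) * v * (B * (e1 * e2))) by ring.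
    apply Rmult_le_compat_r; [auto | nra].
Qed.

Lemma riccati_sup_le d d' T lam C Q (Th : vec -> Prop) A E a Ebar :
  0 < T -> 0 < lam -> sym_psd d Q ->
  (forall th, Th th -> forall t, 0 <= t <= T -> frob d d (A th t) <= a) ->
  (forall th, Th th -> riccati_sol d d' T lam C Q (A th) (E th)) ->
  is_lub (fun r => exists t th, 0 <= t <= T /\ Th th /\ r = frob d d (E th t)) Ebar ->
  Ebar <= sqrt ((fsq d Q + T * frob d d (mmul d' (trn C) C) ^ 2) * exp ((4 * a + 1) * T)).
Proof.
  intros HT Hl HQ Ha Hsol [Hub Hlub]. apply Hlub. intros r [t [th [Ht [Hth ->]]]].
  apply sqrt_le_1_alt. apply (riccati_sol_fsq_le d d' T lam C Q (A th) (E th) a Ebar); auto.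
  intros s Hs. split; [apply Ha; auto | apply Hub; exists s, th; auto].
Qed.

Theorem mainTheorem11
  (d d' p : nat) (T : R) (C Q : Mat) (Th : vec -> Prop) (A : vec -> R -> Mat)
  (HT : 0 < T)
  (HQ : sym_psd d Q)
  (HC1 : compact_p p Th)
  (HC3 : A_cont d p T Th A)
  (HLip : A_L2_lipschitz d p T Th A) :
  exists K1 K2 L1 : R, 0 < K1 /\ 0 < K2 /\ 0 < L1 /\
    forall (lam : R) (E : vec -> R -> Mat), 0 < lam ->
      (forall th, Th th -> riccati_sol d d' T lam C Q (A th) (E th)) ->
      forall Ebar : R,
        is_lub (fun r => exists t th, 0 <= t <= T /\ Th th /\
                                      r = frob d d (E th t)) Ebar ->
        (forall th th' t, Th th -> Th th' -> 0 <= t <= T ->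
           frob d d (msub (E th t) (E th' t))
             <= K1 * Ebar * exp (L1 * Ebar / lam) * vdist p th th') /\
        Ebar <= K2 * exp (L1 / lam).
Proof.
  destruct (A_uniformly_bounded d p T Th A HT HC1 HC3) as [a Ha].
  destruct HLip as [L [HL HLip]].
  set (K2 := sqrt ((fsq d Q + T * frob d d (mmul d' (trn C) C) ^ 2) * exp ((4 * a + 1) * T))).
  assert (HK2 : 0 <= K2) by apply sqrt_pos.
  exists (2 * (L + 1) * exp ((4 * a + 1) * T / 2)), (K2 + 1), (2 * T).
  split; [pose proof (exp_pos ((4 * a + 1) * T / 2)); nra|]. split; [lra|]. split; [lra|].
  intros lam E Hl Hsol Ebar HEbar. split.
  - intros th th' t Hth Hth' Ht.
    apply (riccati_sol_sub_frob_le d d' T lam C Q (A th) (A th') (E th) (E th') a Ebar L); auto.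
    + intros s Hs. destruct HEbar as [Hub _].
      repeat split; try apply Ha; auto; apply Hub; eauto.
    + apply (A_cont_sub_sq_continuous d p T Th A); auto.
    + apply sqrt_pos.
  - pose proof (riccati_sup_le d d' T lam C Q Th A E a Ebar HT Hl HQ Ha Hsol HEbar) as Hsup.
    fold K2 in Hsup.
    assert (1 <= exp (2 * T / lam)) by (rewrite <- exp_0; apply exp_le_compat, Rlt_le, Rdiv_lt_0_compat; lra).
    nra.
Qed.
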